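(* Every sequent provable in the calculus $\mathsf{G4iSLt}+(\mathrm{cut})$ is provable in $\mathsf{G4iSLt}$; i.e. the additive cut rule is eliminable from $\mathsf{G4iSLt}+(\mathrm{cut})$.
   Context: Formulas are built by the grammar $\varphi ::= p \mid \bot \mid \varphi\land\varphi \mid \varphi\lor\varphi \mid \varphi\to\varphi \mid \Box\varphi$, with $p$ ranging over a countably infinite set of propositional variables. For a multiset $\Gamma$, $\Box\Gamma=\{\Box\psi:\psi\in\Gamma\}$; a boxed formula is one of the form $\Box\psi$. A sequent is $\Gamma\Rightarrow\chi$ with $\Gamma$ a finite multiset of formulas and $\chi$ a formula. The sequent calculus $\mathsf{G4iSLt}$ has the following rules, where $p$ is a propositional variable and $\Phi$ always denotes a multiset containing no boxed formula: (⊥L) $\bot,\Gamma\Rightarrow\chi$ (no premise); (IdP) $\Gamma,p\Rightarrow p$ (no premise); (∧L) from $\Gamma,\varphi,\psi\Rightarrow\chi$ infer $\Gamma,\varphi\land\psi\Rightarrow\chi$; (∧R) from $\Gamma\Rightarrow\varphi$ and $\Gamma\Rightarrow\psi$ infer $\Gamma\Rightarrow\varphi\land\psi$; (∨L) from $\Gamma,\varphi\Rightarrow\chi$ and $\Gamma,\psi\Rightarrow\chi$ infer $\Gamma,\varphi\lor\psi\Rightarrow\chi$; (∨R$_i$), $i\in\{1,2\}$: from $\Gamma\Rightarrow\varphi_i$ infer $\Gamma\Rightarrow\varphi_1\lor\varphi_2$; (p→L) from $\Gamma,p,\varphi\Rightarrow\chi$ infer $\Gamma,p,p\to\varphi\Rightarrow\chi$;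 (→R) from $\Gamma,\varphi\Rightarrow\psi$ infer $\Gamma\Rightarrow\varphi\to\psi$; (□→L) from $\Phi,\Gamma,\psi,\Box\varphi\Rightarrow\varphi$ and $\Phi,\Box\Gamma,\psi\Rightarrow\chi$ infer $\Phi,\Box\Gamma,\Box\varphi\to\psi\Rightarrow\chi$; (SLtR) from $\Phi,\Gamma,\Box\varphi\Rightarrow\varphi$ infer $\Phi,\Box\Gamma\Rightarrow\Box\varphi$; (∧→L) from $\Gamma,\varphi\to(\psi\to\chi)\Rightarrow\delta$ infer $\Gamma,(\varphi\land\psi)\to\chi\Rightarrow\delta$; (∨→L) from $\Gamma,\varphi\to\chi,\psi\to\chi\Rightarrow\delta$ infer $\Gamma,(\varphi\lor\psi)\to\chi\Rightarrow\delta$; (→→L) from $\Gamma,\psi\to\chi\Rightarrow\varphi\to\psi$ and $\Gamma,\chi\Rightarrow\delta$ infer $\Gamma,(\varphi\to\psi)\to\chi\Rightarrow\delta$. A proof of a sequent $S$ is a finite tree of sequents with root $S$ in which each interior node together with its children forms an instance of a rule (conclusion, premises) and each leaf is the conclusion of a premise-free rule; $S$ is provable if it has a proof. The calculus $\mathsf{G4iSLt}+(\mathrm{cut})$ consists of all rules of $\mathsf{G4iSLt}$ together with the additive cut rule: from $\Gamma\Rightarrow\varphi$ and $\varphi,\Gamma\Rightarrow\chi$ infer $\Gamma\Rightarrow\chi$ (for arbitrary finite multiset $\Gamma$ and formulas $\varphi,\chi$). *)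

From Stdlib Require Import List Permutation.
Import ListNotations.

Inductive form : Type :=
| Var : nat -> form
| Bot : form
| And : form -> form -> form
| Or : form -> form -> form
| Imp : form -> form -> form
| Box : form -> form.

Definition is_boxed (A : form) : Prop :=
  match A with Box _ => True | _ => False end.

Definition unboxed (Phi : list form) : Prop := forall A, In A Phi -> ~ is_boxed A.

Definition boxes (G : list form) : list form := map Box G.

(* Multisets are represented by lists; the conclusion context of every rule
   is taken up to permutation (multiset equality). The boolean [cut]
   selects whether the additive cut rule is available. *)
Inductive prv (cut : bool) : list form -> form -> Prop :=
| BotL : forall G D chi, Permutation D (Bot :: G) -> prv cut D chi
| IdP : forall G D p, Permutation D (Var p :: G) -> prv cut D (Var p)
| AndL : forall G D a b chi, Permutation D (And a b :: G) ->
    prv cut (a :: b :: G) chi -> prv cut D chi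
| AndR : forall G a b, prv cut G a -> prv cut G b -> prv cut G (And a b)
| OrL : forall G D a b chi, Permutation D (Or a b :: G) ->
    prv cut (a :: G) chi -> prv cut (b :: G) chi -> prv cut D chi
| OrR1 : forall G a b, prv cut G a -> prv cut G (Or a b)
| OrR2 : forall G a b, prv cut G b -> prv cut G (Or a b)
| PImpL : forall G D p a chi, Permutation D (Var p :: Imp (Var p) a :: G) ->
    prv cut (Var p :: a :: G) chi -> prv cut D chi
| ImpR : forall G a b, prv cut (a :: G) b -> prv cut G (Imp a b)
| BoxImpL : forall Phi G D a b chi, unboxed Phi ->
    Permutation D (Imp (Box a) b :: Phi ++ boxes G) ->
    prv cut (Box a :: b :: Phi ++ G) a ->
    prv cut (b :: Phi ++ boxes G) chi -> prv cut D chi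
| SLtR : forall Phi G D a, unboxed Phi ->
    Permutation D (Phi ++ boxes G) ->
    prv cut (Box a :: Phi ++ G) a -> prv cut D (Box a)
| AndImpL : forall G D a b c d, Permutation D (Imp (And a b) c :: G) ->
    prv cut (Imp a (Imp b c) :: G) d -> prv cut D d
| OrImpL : forall G D a b c d, Permutation D (Imp (Or a b) c :: G) ->
    prv cut (Imp a c :: Imp b c :: G) d -> prv cut D d
| ImpImpL : forall G D a b c d, Permutation D (Imp (Imp a b) c :: G) ->
    prv cut (Imp b c :: G) (Imp a b) -> prv cut (c :: G) d -> prv cut D d
| Cut : forall G a chi, cut = true ->
    prv cut G a -> prv cut (a :: G) chi -> prv cut G chi.

Definition G4iSLt_prv (G : list form) (chi : form) : Prop := prv false G chi.
Definition G4iSLt_cut_prv (G : list form) (chi : form) : Prop := prv true G chi.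

From Stdlib Require Import List Permutation Arith Lia.
Import ListNotations.

(* Cut is admissible by the usual argument for Dyckhoff-style calculi: an
   induction on the weight of the cut formula, and inside it on a multiset
   measure of the sequent, pushing the cut upwards past every rule in which it
   is not principal. This rests on weakening, on the invertibility of most left
   rules and on contraction; contraction is proved simultaneously with a
   generalised (→L) rule, by induction on weight. The modal rules only see the
   context with its outermost boxes removed, and removing a box on the left is
   itself admissible. The one genuinely modal case, a cut on [□a → b] against
   (□→L), is solved by rebuilding [□a] with SLtR from the premises at hand. *)

Definition form_eq_dec : forall x y : form, {x = y} + {x <> y}.
Proof. decide equality; apply Nat.eq_dec. Qed.

Ltac solve_perm :=
  apply (Permutation_count_occ form_eq_dec); let x0 := fresh "x" in intro x0;
  repeat match goal with
  | H : Permutation _ _ |- _ =>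
      let H' := fresh "Hc" in
      pose proof (proj1 (Permutation_count_occ form_eq_dec _ _) H x0) as H';
      clear H
  end;
  repeat rewrite ?count_occ_app, ?map_app in *; simpl in *;
  repeat rewrite ?count_occ_app in *;
  repeat match goal with
  | |- context [form_eq_dec ?a ?b] => destruct (form_eq_dec a b)
  | H : context [form_eq_dec ?a ?b] |- _ => destruct (form_eq_dec a b)
  end; first [lia | congruence].

Lemma prv_perm c D D' chi : prv c D chi -> Permutation D D' -> prv c D' chi.
Proof.
  intros Hd; revert D'; induction Hd; intros D' HP.
  - eapply BotL. rewrite <- HP; eassumption.
  - eapply IdP. rewrite <- HP; eassumption.
  - eapply AndL; [rewrite <- HP; eassumption | eauto].
  - apply AndR; eauto.
  - eapply OrL; [rewrite <- HP; eassumption | eauto | eauto].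
  - apply OrR1; eauto.
  - apply OrR2; eauto.
  - eapply PImpL; [rewrite <- HP; eassumption | eauto].
  - apply ImpR; eauto.
  - eapply BoxImpL; [eassumption | rewrite <- HP; eassumption | eauto | eauto].
  - eapply SLtR; [eassumption | rewrite <- HP; eassumption | eauto].
  - eapply AndImpL; [rewrite <- HP; eassumption | eauto].
  - eapply OrImpL; [rewrite <- HP; eassumption | eauto].
  - eapply ImpImpL; [rewrite <- HP; eassumption | eauto | eauto].
  - eapply Cut; eauto.
Qed.

Lemma Permutation_cons_cons_inv (X Y : form) G H :
  Permutation (X :: G) (Y :: H) ->
  (X = Y /\ Permutation G H) \/
  (X <> Y /\ exists K, Permutation G (Y :: K) /\ Permutation H (X :: K)).
Proof.
  intros HP. destruct (form_eq_dec X Y) as [<- | Hne].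
  - left; split; [reflexivity | exact (Permutation_cons_inv HP)].
  - right; split; [exact Hne |].
    assert (HY : In Y G).
    { assert (HXG : In Y (X :: G)) by (rewrite HP; left; reflexivity).
      destruct HXG; [congruence | assumption]. }
    apply in_split in HY as (G1 & G2 & ->). exists (G1 ++ G2). split.
    + symmetry; apply Permutation_middle.
    + apply (Permutation_cons_inv (a := Y)). rewrite <- HP.
      rewrite <- Permutation_middle. apply perm_swap.
Qed.

Lemma perm_same_head D (X : form) G G' :
  Permutation D (X :: G) -> Permutation D (X :: G') -> Permutation G' G.
Proof. intros H1 H2. apply (Permutation_cons_inv (a := X)). now rewrite <- H2, H1. Qed.

Lemma perm_distinct_heads D (X Y : form) G G' :
  Permutation D (X :: G) -> Permutation D (Y :: G') -> X <> Y ->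
  exists K, Permutation G' (X :: K) /\ Permutation G (Y :: K).
Proof.
  intros H1 H2 Hne.
  assert (H3 : Permutation (Y :: G') (X :: G)) by (rewrite <- H1; symmetry; exact H2).
  destruct (Permutation_cons_cons_inv _ _ _ _ H3) as [[E _] | [_ HK]]; [congruence | exact HK].
Qed.

Lemma perm_distinct_heads2 D (X Z Y : form) G G' :
  Permutation D (X :: Z :: G) -> Permutation D (Y :: G') -> X <> Y -> Z <> Y ->
  exists K, Permutation G' (X :: Z :: K) /\ Permutation G (Y :: K).
Proof.
  intros H1 H2 Hne1 Hne2.
  destruct (perm_distinct_heads _ _ _ _ _ H1 H2 Hne1) as (K1 & HK1 & HK2).
  destruct (perm_distinct_heads _ _ _ _ _ HK2 (Permutation_refl _) (not_eq_sym Hne2))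
    as (K & HK3 & HK4).
  exists K. split; [rewrite HK1, HK4; reflexivity | exact HK3].
Qed.

(* The premises of SLtR and of the left premise of (□→L) replace the boxed part
   [□Γ] of the conclusion context by [Γ]; [map unbox] computes this directly,
   without splitting the context into [Φ] and [□Γ]. *)
Definition unbox (A : form) : form := match A with Box a => a | _ => A end.

Lemma unbox_unboxed A : ~ is_boxed A -> unbox A = A.
Proof. destruct A; simpl; tauto. Qed.

Lemma box_or_unbox_id A : (exists a, A = Box a) \/ unbox A = A.
Proof. destruct A; simpl; eauto. Qed.

Lemma map_unbox_unboxed Phi : unboxed Phi -> map unbox Phi = Phi.
Proof.
  induction Phi as [|A Phi IH]; intros HU; simpl; [reflexivity |].
  rewrite unbox_unboxed, IH; [reflexivity | |].
  - intros B HB; apply HU; right; exact HB.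
  - apply HU; left; reflexivity.
Qed.

Lemma map_unbox_boxes G : map unbox (boxes G) = G.
Proof. induction G; simpl; congruence. Qed.

Lemma map_unbox_split Phi G : unboxed Phi -> map unbox (Phi ++ boxes G) = Phi ++ G.
Proof. intros HU. rewrite map_app, map_unbox_unboxed, map_unbox_boxes; auto. Qed.

Lemma perm_map_unbox D Phi G :
  Permutation D (Phi ++ boxes G) -> unboxed Phi -> Permutation (map unbox D) (Phi ++ G).
Proof. intros HP HU. rewrite <- map_unbox_split by exact HU. now apply Permutation_map. Qed.

Lemma split_boxed D : exists Phi G, unboxed Phi /\ Permutation D (Phi ++ boxes G).
Proof.
  induction D as [|A D (Phi & G & HU & HP)].
  - exists [], []. split; [intros B [] | reflexivity].
  - destruct A as [p | | a b | a b | a b | a];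
      [.. | exists Phi, (a :: G); split; [exact HU | simpl; rewrite HP; apply Permutation_middle]];
      (eexists (_ :: Phi), G; split; [| simpl; apply perm_skip; exact HP]);
      (intros B [<- | HB]; [simpl; tauto | now apply HU]).
Qed.

Lemma SLtR_unbox c D a : prv c (Box a :: map unbox D) a -> prv c D (Box a).
Proof.
  intros H. destruct (split_boxed D) as (Phi & G & HU & HP).
  eapply SLtR; [exact HU | exact HP |].
  eapply prv_perm; [exact H |]. apply perm_skip. exact (perm_map_unbox _ _ _ HP HU).
Qed.

Lemma BoxImpL_unbox c D a b chi :
  prv c (Box a :: b :: map unbox D) a -> prv c (b :: D) chi ->
  prv c (Imp (Box a) b :: D) chi.
Proof.
  intros H1 H2. destruct (split_boxed D) as (Phi & G & HU & HP).
  eapply BoxImpL with (Phi := Phi) (G := G); [exact HU | now apply perm_skip | |].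
  - eapply prv_perm; [exact H1 |]. do 2 apply perm_skip. exact (perm_map_unbox _ _ _ HP HU).
  - eapply prv_perm; [exact H2 |]. now apply perm_skip.
Qed.

Lemma prv_weaken c D chi A : prv c D chi -> prv c (A :: D) chi.
Proof.
  intros Hd; revert A; induction Hd; intro A0.
  - eapply BotL with (G := A0 :: G). solve_perm.
  - eapply IdP with (G := A0 :: G). solve_perm.
  - eapply AndL with (G := A0 :: G) (a := a) (b := b). solve_perm.
    eapply prv_perm; [apply (IHHd A0) |]. solve_perm.
  - apply AndR; auto.
  - eapply OrL with (G := A0 :: G) (a := a) (b := b). solve_perm.
    + eapply prv_perm; [apply (IHHd1 A0) |]. solve_perm.
    + eapply prv_perm; [apply (IHHd2 A0) |]. solve_perm.
  - apply OrR1; auto.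
  - apply OrR2; auto.
  - eapply PImpL with (G := A0 :: G) (p := p) (a := a). solve_perm.
    eapply prv_perm; [apply (IHHd A0) |]. solve_perm.
  - apply ImpR. eapply prv_perm; [apply (IHHd A0) |]. solve_perm.
  - eapply prv_perm with (D := Imp (Box a) b :: A0 :: Phi ++ boxes G); [| solve_perm].
    apply BoxImpL_unbox.
    + simpl. rewrite map_unbox_split by exact H.
      eapply prv_perm; [apply (IHHd1 (unbox A0)) |]. solve_perm.
    + eapply prv_perm; [apply (IHHd2 A0) |]. solve_perm.
  - apply SLtR_unbox. simpl.
    pose proof (perm_map_unbox _ _ _ H0 H).
    eapply prv_perm; [apply (IHHd (unbox A0)) |]. solve_perm.
  - eapply AndImpL with (G := A0 :: G) (a := a) (b := b) (c := c0). solve_perm.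
    eapply prv_perm; [apply (IHHd A0) |]. solve_perm.
  - eapply OrImpL with (G := A0 :: G) (a := a) (b := b) (c := c0). solve_perm.
    eapply prv_perm; [apply (IHHd A0) |]. solve_perm.
  - eapply ImpImpL with (G := A0 :: G) (a := a) (b := b) (c := c0). solve_perm.
    + eapply prv_perm; [apply (IHHd1 A0) |]. solve_perm.
    + eapply prv_perm; [apply (IHHd2 A0) |]. solve_perm.
  - eapply Cut; [eassumption | auto |].
    eapply prv_perm; [apply (IHHd2 A0) |]. solve_perm.
Qed.

Lemma prv_weaken_app c L D chi : prv c D chi -> prv c (L ++ D) chi.
Proof. induction L; simpl; intros; auto using prv_weaken. Qed.

Ltac split_heads H HP :=
  destruct (perm_distinct_heads _ _ _ _ _ H HP ltac:(discriminate)) as (K & HK1 & HK2).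

Lemma prv_debox c D chi : prv c D chi ->
  forall g G, Permutation D (Box g :: G) -> prv c (g :: G) chi.
Proof.
  induction 1; intros g0 G0 HP.
  - split_heads H HP.
    eapply BotL with (G := g0 :: K). solve_perm.
  - split_heads H HP.
    eapply IdP with (G := g0 :: K). solve_perm.
  - split_heads H HP.
    eapply AndL with (G := g0 :: K) (a := a) (b := b). solve_perm.
    eapply prv_perm; [apply (IHprv g0 (a :: b :: K)) |]; solve_perm.
  - apply AndR; eauto.
  - split_heads H HP.
    eapply OrL with (G := g0 :: K) (a := a) (b := b). solve_perm.
    + eapply prv_perm; [apply (IHprv1 g0 (a :: K)) |]; solve_perm.
    + eapply prv_perm; [apply (IHprv2 g0 (b :: K)) |]; solve_perm.
  - apply OrR1; eauto.
  - apply OrR2; eauto.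
  - destruct (perm_distinct_heads2 _ _ _ _ _ _ H HP ltac:(discriminate) ltac:(discriminate))
      as (K & HK1 & HK2).
    eapply PImpL with (G := g0 :: K) (p := p) (a := a). solve_perm.
    eapply prv_perm; [apply (IHprv g0 (Var p :: a :: K)) |]; solve_perm.
  - apply ImpR. eapply prv_perm; [apply (IHprv g0 (a :: G0)) |]; solve_perm.
  - split_heads H0 HP.
    assert (Hm : Permutation (Phi ++ G) (g0 :: map unbox K)).
    { rewrite <- (map_unbox_split _ _ H). apply (Permutation_map unbox) in HK2. exact HK2. }
    eapply prv_perm with (D := Imp (Box a) b :: g0 :: K); [| solve_perm].
    apply BoxImpL_unbox.
    + simpl. destruct (box_or_unbox_id g0) as [(h & ->) | E].
      * eapply prv_perm; [apply (IHprv1 h (Box a :: b :: map unbox K)) |]; solve_perm.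
      * rewrite E. eapply prv_perm; [exact H1 |]. solve_perm.
    + eapply prv_perm; [apply (IHprv2 g0 (b :: K)) |]; solve_perm.
  - apply SLtR_unbox.
    assert (Hm : Permutation (Phi ++ G) (g0 :: map unbox G0)).
    { rewrite <- (perm_map_unbox _ _ _ H0 H). exact (Permutation_map unbox HP). }
    simpl. destruct (box_or_unbox_id g0) as [(h & ->) | E].
    + eapply prv_perm; [apply (IHprv h (Box a :: map unbox G0)) |]; solve_perm.
    + rewrite E. eapply prv_perm; [exact H1 |]. solve_perm.
  - split_heads H HP.
    eapply AndImpL with (G := g0 :: K) (a := a) (b := b) (c := c0). solve_perm.
    eapply prv_perm; [apply (IHprv g0 (Imp a (Imp b c0) :: K)) |]; solve_perm.
  - split_heads H HP.
    eapply OrImpL with (G := g0 :: K) (a := a) (b := b) (c := c0). solve_perm.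
    eapply prv_perm; [apply (IHprv g0 (Imp a c0 :: Imp b c0 :: K)) |]; solve_perm.
  - split_heads H HP.
    eapply ImpImpL with (G := g0 :: K) (a := a) (b := b) (c := c0). solve_perm.
    + eapply prv_perm; [apply (IHprv1 g0 (Imp b c0 :: K)) |]; solve_perm.
    + eapply prv_perm; [apply (IHprv2 g0 (c0 :: K)) |]; solve_perm.
  - eapply Cut; [eassumption | eauto |].
    eapply prv_perm; [apply (IHprv2 g0 (a :: G0)) |]; solve_perm.
Qed.

Lemma prv_unbox_prefix c L1 L2 chi :
  prv c (L1 ++ L2) chi -> prv c (map unbox L1 ++ L2) chi.
Proof.
  revert L2; induction L1 as [|A L1 IH]; intros L2 H; simpl in *; [exact H |].
  assert (H' : prv c (A :: map unbox L1 ++ L2) chi).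
  { eapply prv_perm; [apply IH; eapply prv_perm; [exact H | apply Permutation_middle] |].
    symmetry; apply Permutation_middle. }
  destruct (box_or_unbox_id A) as [(a & ->) | ->]; [| exact H'].
  exact (prv_debox _ _ _ H' _ _ (Permutation_refl _)).
Qed.

Lemma prv_unbox_suffix c L1 L2 chi :
  prv c (L1 ++ L2) chi -> prv c (L1 ++ map unbox L2) chi.
Proof.
  intros H. eapply prv_perm; [apply prv_unbox_prefix | apply Permutation_app_comm].
  eapply prv_perm; [exact H | apply Permutation_app_comm].
Qed.

(** * Invertibility of the rules *)

(* Replacing a non-boxed, non-atomic formula [X] of the context by the list [X']
   is admissible as soon as it is admissible at each rule with principal
   formula [X]; all other rules permute with the replacement. *)
Lemma prv_replace_left c (X : form) (X' : list form) :
  ~ is_boxed X -> (forall p, X <> Var p) -> X <> Bot ->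
  (forall a b H chi, X = And a b -> prv c (a :: b :: H) chi -> prv c (X' ++ H) chi) ->
  (forall a b H chi, X = Or a b ->
     prv c (a :: H) chi -> prv c (b :: H) chi -> prv c (X' ++ H) chi) ->
  (forall p a H chi, X = Imp (Var p) a ->
     prv c (Var p :: a :: H) chi -> prv c (X' ++ Var p :: H) chi) ->
  (forall a b H chi, X = Imp (Box a) b ->
     prv c (Box a :: b :: map unbox H) a -> prv c (b :: H) chi -> prv c (X' ++ H) chi) ->
  (forall a b d H chi, X = Imp (And a b) d ->
     prv c (Imp a (Imp b d) :: H) chi -> prv c (X' ++ H) chi) ->
  (forall a b d H chi, X = Imp (Or a b) d ->
     prv c (Imp a d :: Imp b d :: H) chi -> prv c (X' ++ H) chi) ->
  (forall a b d H chi, X = Imp (Imp a b) d ->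
     prv c (Imp b d :: H) (Imp a b) -> prv c (d :: H) chi -> prv c (X' ++ H) chi) ->
  forall D chi, prv c D chi -> forall G, Permutation D (X :: G) -> prv c (X' ++ G) chi.
Proof.
  intros hX hV hB hAndL hOrL hPImpL hBoxImpL hAndImpL hOrImpL hImpImpL.
  induction 1; intros G0 HP.
  - assert (Hne : Bot <> X) by congruence.
    destruct (perm_distinct_heads _ _ _ _ _ H HP Hne) as (K & HK1 & HK2).
    eapply BotL with (G := X' ++ K). solve_perm.
  - assert (Hne : Var p <> X) by (intro E; apply (hV p); auto).
    destruct (perm_distinct_heads _ _ _ _ _ H HP Hne) as (K & HK1 & HK2).
    eapply IdP with (G := X' ++ K). solve_perm.
  - destruct (form_eq_dec (And a b) X) as [<- | Hne].
    + eapply hAndL; [reflexivity |]. eapply prv_perm; [exact H0 |].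
      pose proof (perm_same_head _ _ _ _ H HP). solve_perm.
    + destruct (perm_distinct_heads _ _ _ _ _ H HP Hne) as (K & HK1 & HK2).
      eapply AndL with (G := X' ++ K) (a := a) (b := b). solve_perm.
      eapply prv_perm; [apply (IHprv (a :: b :: K)) |]; solve_perm.
  - apply AndR; eauto.
  - destruct (form_eq_dec (Or a b) X) as [<- | Hne].
    + pose proof (perm_same_head _ _ _ _ H HP).
      eapply hOrL; [reflexivity | eapply prv_perm; [exact H0 |]; solve_perm
                  | eapply prv_perm; [exact H1 |]; solve_perm].
    + destruct (perm_distinct_heads _ _ _ _ _ H HP Hne) as (K & HK1 & HK2).
      eapply OrL with (G := X' ++ K) (a := a) (b := b). solve_perm.
      * eapply prv_perm; [apply (IHprv1 (a :: K)) |]; solve_perm.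
      * eapply prv_perm; [apply (IHprv2 (b :: K)) |]; solve_perm.
  - apply OrR1; eauto.
  - apply OrR2; eauto.
  - assert (Hne1 : Var p <> X) by (intro E; apply (hV p); auto).
    destruct (form_eq_dec (Imp (Var p) a) X) as [<- | Hne].
    + assert (Permutation G0 (Var p :: G)).
      { eapply Permutation_cons_inv. rewrite <- HP, H. apply perm_swap. }
      eapply prv_perm; [eapply hPImpL; eauto |]. solve_perm.
    + destruct (perm_distinct_heads2 _ _ _ _ _ _ H HP Hne1 Hne) as (K & HK1 & HK2).
      eapply PImpL with (G := X' ++ K) (p := p) (a := a). solve_perm.
      eapply prv_perm; [apply (IHprv (Var p :: a :: K)) |]; solve_perm.
  - apply ImpR. eapply prv_perm; [apply (IHprv (a :: G0)) |]; solve_perm.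
  - destruct (form_eq_dec (Imp (Box a) b) X) as [<- | Hne].
    + pose proof (perm_same_head _ _ _ _ H0 HP) as HG.
      eapply hBoxImpL; [reflexivity | |].
      * eapply prv_perm; [exact H1 |]. apply (Permutation_map unbox) in HG.
        rewrite (map_unbox_split _ _ H) in HG. solve_perm.
      * eapply prv_perm; [exact H2 |]. solve_perm.
    + destruct (perm_distinct_heads _ _ _ _ _ H0 HP Hne) as (K & HK1 & HK2).
      assert (Hm : Permutation (Phi ++ G) (X :: map unbox K)).
      { rewrite <- (map_unbox_split _ _ H). apply (Permutation_map unbox) in HK2.
        rewrite HK2. simpl. rewrite unbox_unboxed; auto. }
      eapply prv_perm with (D := Imp (Box a) b :: X' ++ K); [| solve_perm].
      apply BoxImpL_unbox.
      * rewrite map_app.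
        eapply prv_perm with (D := map unbox X' ++ Box a :: b :: map unbox K); [| solve_perm].
        apply prv_unbox_prefix. apply (IHprv1 (Box a :: b :: map unbox K)). solve_perm.
      * eapply prv_perm; [apply (IHprv2 (b :: K)) |]; solve_perm.
  - apply SLtR_unbox.
    assert (Hm : Permutation (Phi ++ G) (X :: map unbox G0)).
    { rewrite <- (perm_map_unbox _ _ _ H0 H). apply (Permutation_map unbox) in HP.
      rewrite HP. simpl. rewrite unbox_unboxed; auto. }
    rewrite map_app.
    eapply prv_perm with (D := map unbox X' ++ Box a :: map unbox G0); [| solve_perm].
    apply prv_unbox_prefix. apply (IHprv (Box a :: map unbox G0)). solve_perm.
  - destruct (form_eq_dec (Imp (And a b) c0) X) as [<- | Hne].
    + pose proof (perm_same_head _ _ _ _ H HP).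
      eapply hAndImpL; [reflexivity | eapply prv_perm; [exact H0 |]; solve_perm].
    + destruct (perm_distinct_heads _ _ _ _ _ H HP Hne) as (K & HK1 & HK2).
      eapply AndImpL with (G := X' ++ K) (a := a) (b := b) (c := c0). solve_perm.
      eapply prv_perm; [apply (IHprv (Imp a (Imp b c0) :: K)) |]; solve_perm.
  - destruct (form_eq_dec (Imp (Or a b) c0) X) as [<- | Hne].
    + pose proof (perm_same_head _ _ _ _ H HP).
      eapply hOrImpL; [reflexivity | eapply prv_perm; [exact H0 |]; solve_perm].
    + destruct (perm_distinct_heads _ _ _ _ _ H HP Hne) as (K & HK1 & HK2).
      eapply OrImpL with (G := X' ++ K) (a := a) (b := b) (c := c0). solve_perm.
      eapply prv_perm; [apply (IHprv (Imp a c0 :: Imp b c0 :: K)) |]; solve_perm.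
  - destruct (form_eq_dec (Imp (Imp a b) c0) X) as [<- | Hne].
    + pose proof (perm_same_head _ _ _ _ H HP).
      eapply hImpImpL; [reflexivity | eapply prv_perm; [exact H0 |]; solve_perm
                      | eapply prv_perm; [exact H1 |]; solve_perm].
    + destruct (perm_distinct_heads _ _ _ _ _ H HP Hne) as (K & HK1 & HK2).
      eapply ImpImpL with (G := X' ++ K) (a := a) (b := b) (c := c0). solve_perm.
      * eapply prv_perm; [apply (IHprv1 (Imp b c0 :: K)) |]; solve_perm.
      * eapply prv_perm; [apply (IHprv2 (c0 :: K)) |]; solve_perm.
  - eapply Cut; [eassumption | eauto |].
    eapply prv_perm; [apply (IHprv2 (a :: G0)) |]; solve_perm.
Qed.

Lemma AndL_inv a b G chi : prv false (And a b :: G) chi -> prv false (a :: b :: G) chi.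
Proof.
  intros H. apply (prv_replace_left false (And a b) [a; b]) with (D := And a b :: G);
    try (intros; discriminate); auto.
  intros a' b' H' chi' E Hp. injection E as -> ->. exact Hp.
Qed.

Lemma OrL_inv1 a b G chi : prv false (Or a b :: G) chi -> prv false (a :: G) chi.
Proof.
  intros H. apply (prv_replace_left false (Or a b) [a]) with (D := Or a b :: G);
    try (intros; discriminate); auto.
  intros a' b' H' chi' E Hp1 Hp2. injection E as -> ->. exact Hp1.
Qed.

Lemma OrL_inv2 a b G chi : prv false (Or a b :: G) chi -> prv false (b :: G) chi.
Proof.
  intros H. apply (prv_replace_left false (Or a b) [b]) with (D := Or a b :: G);
    try (intros; discriminate); auto.
  intros a' b' H' chi' E Hp1 Hp2. injection E as -> ->. exact Hp2.
Qed.

Lemma AndImpL_inv a b c G chi :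
  prv false (Imp (And a b) c :: G) chi -> prv false (Imp a (Imp b c) :: G) chi.
Proof.
  intros H.
  apply (prv_replace_left false (Imp (And a b) c) [Imp a (Imp b c)])
    with (D := Imp (And a b) c :: G); try (intros; discriminate); auto.
  intros a' b' d' H' chi' E Hp. injection E as -> -> ->. exact Hp.
Qed.

Lemma OrImpL_inv a b c G chi :
  prv false (Imp (Or a b) c :: G) chi -> prv false (Imp a c :: Imp b c :: G) chi.
Proof.
  intros H.
  apply (prv_replace_left false (Imp (Or a b) c) [Imp a c; Imp b c])
    with (D := Imp (Or a b) c :: G); try (intros; discriminate); auto.
  intros a' b' d' H' chi' E Hp. injection E as -> -> ->. exact Hp.
Qed.

(* For a conjunctive or disjunctive antecedent the rules (∧→L) and (∨→L) do not
   expose [e]; that case needs contraction and is completed in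
   [ImpL_concl_inv]. *)
Lemma ImpL_concl_inv_nonjunctive x e G chi :
  (forall a b, x <> And a b) -> (forall a b, x <> Or a b) ->
  prv false (Imp x e :: G) chi -> prv false (e :: G) chi.
Proof.
  intros HA HO H.
  apply (prv_replace_left false (Imp x e) [e]) with (D := Imp x e :: G);
    try (intros; discriminate); auto.
  - intros p a H' chi' E Hp. injection E as -> ->. eapply prv_perm; [exact Hp |]. solve_perm.
  - intros a b H' chi' E Hp1 Hp2. injection E as -> ->. exact Hp2.
  - intros a b d H' chi' E. injection E as -> ->. exfalso; eapply HA; eauto.
  - intros a b d H' chi' E. injection E as -> ->. exfalso; eapply HO; eauto.
  - intros a b d H' chi' E Hp1 Hp2. injection E as -> ->. exact Hp2.
Qed.

Lemma VarImpL_concl_inv p e G chi :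
  prv false (Imp (Var p) e :: G) chi -> prv false (e :: G) chi.
Proof. apply ImpL_concl_inv_nonjunctive; discriminate. Qed.

Lemma ImpImpL_concl_inv a b e G chi :
  prv false (Imp (Imp a b) e :: G) chi -> prv false (e :: G) chi.
Proof. apply ImpL_concl_inv_nonjunctive; discriminate. Qed.

Lemma BoxImpL_concl_inv a e G chi :
  prv false (Imp (Box a) e :: G) chi -> prv false (e :: G) chi.
Proof. apply ImpL_concl_inv_nonjunctive; discriminate. Qed.

(* Dually, transforming the goal [chi] into any [chi'] with [T chi chi'] (while
   adding [L] to the context) only has to be checked at the right rules. *)
Lemma prv_replace_right (L : list form) (T : form -> form -> Prop) :
  (forall G D p chi', Permutation D (Var p :: G) -> T (Var p) chi' -> prv false (L ++ D) chi') ->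
  (forall G a b chi', T (And a b) chi' ->
     prv false G a -> prv false G b -> prv false (L ++ G) chi') ->
  (forall G a b chi', T (Or a b) chi' -> prv false G a -> prv false (L ++ G) chi') ->
  (forall G a b chi', T (Or a b) chi' -> prv false G b -> prv false (L ++ G) chi') ->
  (forall G a b chi', T (Imp a b) chi' -> prv false (a :: G) b -> prv false (L ++ G) chi') ->
  (forall D a chi', T (Box a) chi' ->
     prv false (Box a :: map unbox D) a -> prv false (L ++ D) chi') ->
  forall D chi, prv false D chi -> forall chi', T chi chi' -> prv false (L ++ D) chi'.
Proof.
  intros hId hAnd hOr1 hOr2 hImp hBox.
  induction 1; intros chi' HT.
  - eapply BotL with (G := L ++ G). solve_perm.
  - eapply hId; eauto.
  - eapply AndL with (G := L ++ G) (a := a) (b := b). solve_perm.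
    eapply prv_perm; [apply (IHprv chi' HT) |]. solve_perm.
  - eapply hAnd; eauto.
  - eapply OrL with (G := L ++ G) (a := a) (b := b). solve_perm.
    + eapply prv_perm; [apply (IHprv1 chi' HT) |]. solve_perm.
    + eapply prv_perm; [apply (IHprv2 chi' HT) |]. solve_perm.
  - eapply hOr1; eauto.
  - eapply hOr2; eauto.
  - eapply PImpL with (G := L ++ G) (p := p) (a := a). solve_perm.
    eapply prv_perm; [apply (IHprv chi' HT) |]. solve_perm.
  - eapply hImp; eauto.
  - eapply prv_perm with (D := Imp (Box a) b :: L ++ Phi ++ boxes G); [| solve_perm].
    apply BoxImpL_unbox.
    + rewrite map_app, map_unbox_split by exact H.
      eapply prv_perm; [apply (prv_weaken_app false (map unbox L)); exact H1 |]. solve_perm.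
    + eapply prv_perm; [apply (IHprv2 chi' HT) |]. solve_perm.
  - eapply hBox; [exact HT |]. eapply prv_perm; [exact H1 |]. apply perm_skip.
    symmetry. exact (perm_map_unbox _ _ _ H0 H).
  - eapply AndImpL with (G := L ++ G) (a := a) (b := b) (c := c). solve_perm.
    eapply prv_perm; [apply (IHprv chi' HT) |]. solve_perm.
  - eapply OrImpL with (G := L ++ G) (a := a) (b := b) (c := c). solve_perm.
    eapply prv_perm; [apply (IHprv chi' HT) |]. solve_perm.
  - eapply ImpImpL with (G := L ++ G) (a := a) (b := b) (c := c). solve_perm.
    + eapply prv_perm; [apply (prv_weaken_app false L); exact H0 |]. solve_perm.
    + eapply prv_perm; [apply (IHprv2 chi' HT) |]. solve_perm.
  - discriminate.
Qed.

Ltac goal_mismatch :=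
  intros; match goal with H : _ /\ _ |- _ => destruct H as [E _]; discriminate end.

Lemma ImpR_inv D a b : prv false D (Imp a b) -> prv false (a :: D) b.
Proof.
  intros H.
  apply (prv_replace_right [a] (fun chi chi' => chi = Imp a b /\ chi' = b)) with (chi := Imp a b);
    auto; try goal_mismatch.
  intros G a' b' chi' [E ->] Hp. injection E as -> ->. exact Hp.
Qed.

Lemma AndR_inv1 D a b : prv false D (And a b) -> prv false D a.
Proof.
  intros H.
  apply (prv_replace_right [] (fun chi chi' => chi = And a b /\ chi' = a)) with (chi := And a b);
    auto; try goal_mismatch.
  intros G a' b' chi' [E ->] Hp1 Hp2. injection E as -> ->. exact Hp1.
Qed.

Lemma AndR_inv2 D a b : prv false D (And a b) -> prv false D b.
Proof.
  intros H.
  apply (prv_replace_right [] (fun chi chi' => chi = And a b /\ chi' = b)) with (chi := And a b);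
    auto; try goal_mismatch.
  intros G a' b' chi' [E ->] Hp1 Hp2. injection E as -> ->. exact Hp2.
Qed.

(** * Derivation height *)

(* Cut-free derivability with height at most [n]. The box rules use [map unbox]
   instead of a split [Φ, □Γ] of the context, which makes weakening
   height-preserving. *)
Inductive prvh : nat -> list form -> form -> Prop :=
| hBotL : forall n G D chi, Permutation D (Bot :: G) -> prvh n D chi
| hIdP : forall n G D p, Permutation D (Var p :: G) -> prvh n D (Var p)
| hAndL : forall n G D a b chi, Permutation D (And a b :: G) ->
    prvh n (a :: b :: G) chi -> prvh (S n) D chi
| hAndR : forall n G a b, prvh n G a -> prvh n G b -> prvh (S n) G (And a b)
| hOrL : forall n G D a b chi, Permutation D (Or a b :: G) ->
    prvh n (a :: G) chi -> prvh n (b :: G) chi -> prvh (S n) D chi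
| hOrR1 : forall n G a b, prvh n G a -> prvh (S n) G (Or a b)
| hOrR2 : forall n G a b, prvh n G b -> prvh (S n) G (Or a b)
| hPImpL : forall n G D p a chi, Permutation D (Var p :: Imp (Var p) a :: G) ->
    prvh n (Var p :: a :: G) chi -> prvh (S n) D chi
| hImpR : forall n G a b, prvh n (a :: G) b -> prvh (S n) G (Imp a b)
| hBoxImpL : forall n G D a b chi, Permutation D (Imp (Box a) b :: G) ->
    prvh n (Box a :: b :: map unbox G) a -> prvh n (b :: G) chi -> prvh (S n) D chi
| hSLtR : forall n D a, prvh n (Box a :: map unbox D) a -> prvh (S n) D (Box a)
| hAndImpL : forall n G D a b c d, Permutation D (Imp (And a b) c :: G) ->
    prvh n (Imp a (Imp b c) :: G) d -> prvh (S n) D d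
| hOrImpL : forall n G D a b c d, Permutation D (Imp (Or a b) c :: G) ->
    prvh n (Imp a c :: Imp b c :: G) d -> prvh (S n) D d
| hImpImpL : forall n G D a b c d, Permutation D (Imp (Imp a b) c :: G) ->
    prvh n (Imp b c :: G) (Imp a b) -> prvh n (c :: G) d -> prvh (S n) D d.

Lemma prvh_perm n D D' chi : prvh n D chi -> Permutation D D' -> prvh n D' chi.
Proof.
  intros Hd; revert D'; induction Hd; intros D' HP.
  - eapply hBotL. rewrite <- HP; eassumption.
  - eapply hIdP. rewrite <- HP; eassumption.
  - eapply hAndL; [rewrite <- HP; eassumption | eauto].
  - apply hAndR; eauto.
  - eapply hOrL; [rewrite <- HP; eassumption | eauto | eauto].
  - apply hOrR1; eauto.
  - apply hOrR2; eauto.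
  - eapply hPImpL; [rewrite <- HP; eassumption | eauto].
  - apply hImpR; eauto.
  - eapply hBoxImpL; [rewrite <- HP; eassumption | eauto | eauto].
  - apply hSLtR, IHHd, perm_skip, Permutation_map, HP.
  - eapply hAndImpL; [rewrite <- HP; eassumption | eauto].
  - eapply hOrImpL; [rewrite <- HP; eassumption | eauto].
  - eapply hImpImpL; [rewrite <- HP; eassumption | eauto | eauto].
Qed.

Lemma prvh_S n D chi : prvh n D chi -> prvh (S n) D chi.
Proof.
  induction 1.
  - eapply hBotL; eauto.
  - eapply hIdP; eauto.
  - eapply hAndL; eauto.
  - apply hAndR; eauto.
  - eapply hOrL; eauto.
  - apply hOrR1; eauto.
  - apply hOrR2; eauto.
  - eapply hPImpL; eauto.
  - apply hImpR; eauto.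
  - eapply hBoxImpL; eauto.
  - apply hSLtR; eauto.
  - eapply hAndImpL; eauto.
  - eapply hOrImpL; eauto.
  - eapply hImpImpL; eauto.
Qed.

Lemma prvh_mono n m D chi : n <= m -> prvh n D chi -> prvh m D chi.
Proof. induction 1; auto using prvh_S. Qed.

Lemma prvh_prv n D chi : prvh n D chi -> prv false D chi.
Proof.
  induction 1.
  - eapply BotL; eauto.
  - eapply IdP; eauto.
  - eapply AndL; eauto.
  - apply AndR; eauto.
  - eapply OrL; eauto.
  - apply OrR1; eauto.
  - apply OrR2; eauto.
  - eapply PImpL; eauto.
  - apply ImpR; eauto.
  - eapply prv_perm; [apply BoxImpL_unbox; eauto | symmetry; auto].
  - apply SLtR_unbox; eauto.
  - eapply AndImpL; eauto.
  - eapply OrImpL; eauto.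
  - eapply ImpImpL; eauto.
Qed.

Lemma prv_prvh D chi : prv false D chi -> exists n, prvh n D chi.
Proof.
  induction 1;
    repeat match goal with IH : exists _, _ |- _ => destruct IH as [?n ?Hn] end.
  - exists 0; eapply hBotL; exact H.
  - exists 0; eapply hIdP; exact H.
  - exists (S n); eapply hAndL; eauto.
  - exists (S (max n n0)).
    apply hAndR; (eapply prvh_mono; [| eassumption]); lia.
  - exists (S (max n n0)).
    eapply hOrL; [exact H | ..]; (eapply prvh_mono; [| eassumption]); lia.
  - exists (S n); apply hOrR1; eauto.
  - exists (S n); apply hOrR2; eauto.
  - exists (S n); eapply hPImpL; eauto.
  - exists (S n); apply hImpR; eauto.
  - exists (S (max n n0)).
    eapply hBoxImpL; [exact H0 | eapply prvh_mono | eapply prvh_mono];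
      [| rewrite map_unbox_split by exact H; eassumption | | eassumption]; lia.
  - exists (S n); apply hSLtR.
    eapply prvh_perm; [exact Hn |]. apply perm_skip. symmetry. apply perm_map_unbox; auto.
  - exists (S n); eapply hAndImpL; eauto.
  - exists (S n); eapply hOrImpL; eauto.
  - exists (S (max n n0)).
    eapply hImpImpL; [exact H | ..]; (eapply prvh_mono; [| eassumption]); lia.
  - discriminate.
Qed.

Lemma prvh_weaken n D chi A : prvh n D chi -> prvh n (A :: D) chi.
Proof.
  intros Hd; revert A; induction Hd; intro A0.
  - eapply hBotL with (G := A0 :: G). solve_perm.
  - eapply hIdP with (G := A0 :: G). solve_perm.
  - eapply hAndL with (G := A0 :: G) (a := a) (b := b). solve_perm.
    eapply prvh_perm; [apply (IHHd A0) | solve_perm].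
  - apply hAndR; auto.
  - eapply hOrL with (G := A0 :: G) (a := a) (b := b). solve_perm.
    + eapply prvh_perm; [apply (IHHd1 A0) | solve_perm].
    + eapply prvh_perm; [apply (IHHd2 A0) | solve_perm].
  - apply hOrR1; auto.
  - apply hOrR2; auto.
  - eapply hPImpL with (G := A0 :: G) (p := p) (a := a). solve_perm.
    eapply prvh_perm; [apply (IHHd A0) | solve_perm].
  - apply hImpR. eapply prvh_perm; [apply (IHHd A0) | solve_perm].
  - eapply hBoxImpL with (G := A0 :: G) (a := a) (b := b). solve_perm.
    + simpl. eapply prvh_perm; [apply (IHHd1 (unbox A0)) | solve_perm].
    + eapply prvh_perm; [apply (IHHd2 A0) | solve_perm].
  - apply hSLtR. simpl. eapply prvh_perm; [apply (IHHd (unbox A0)) | solve_perm].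
  - eapply hAndImpL with (G := A0 :: G) (a := a) (b := b) (c := c). solve_perm.
    eapply prvh_perm; [apply (IHHd A0) | solve_perm].
  - eapply hOrImpL with (G := A0 :: G) (a := a) (b := b) (c := c). solve_perm.
    eapply prvh_perm; [apply (IHHd A0) | solve_perm].
  - eapply hImpImpL with (G := A0 :: G) (a := a) (b := b) (c := c). solve_perm.
    + eapply prvh_perm; [apply (IHHd1 A0) | solve_perm].
    + eapply prvh_perm; [apply (IHHd2 A0) | solve_perm].
Qed.

(** * Contraction *)

(* Conjunction weighs one more than the other connectives, so that the
   (∧→L) premise [a → (b → c)] is lighter than [(a ∧ b) → c]. *)
Fixpoint weight (A : form) : nat :=
  match A with
  | Var _ | Bot => 1
  | And a b => weight a + weight b + 2
  | Or a b | Imp a b => weight a + weight b + 1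
  | Box a => weight a + 1
  end.

Lemma weight_pos A : 1 <= weight A.
Proof. destruct A; simpl; lia. Qed.

Definition contr_adm (X : form) : Prop :=
  forall G E, prv false (X :: X :: G) E -> prv false (X :: G) E.

(* Admissibility of the generalised (→L) rule "from [d → B, Γ ⊢ d] and
   [B, Γ ⊢ E] infer [d → B, Γ ⊢ E]"; it is needed for contraction at (→→L). *)
Definition mp_adm (d B : form) : Prop :=
  forall G E, prv false (Imp d B :: G) d -> prv false (B :: G) E -> prv false (Imp d B :: G) E.

Lemma contr_adm_perm X D G E :
  contr_adm X -> prv false D E -> Permutation D (X :: X :: G) -> prv false (X :: G) E.
Proof. intros HX HD HP. apply HX. exact (prv_perm _ _ _ _ HD HP). Qed.

Lemma ImpL_concl_inv_below x e :
  (forall Y, weight Y < weight x + weight e -> contr_adm Y) ->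
  forall G chi, prv false (Imp x e :: G) chi -> prv false (e :: G) chi.
Proof.
  revert e; induction x; intros e HC G chi H.
  - exact (VarImpL_concl_inv _ _ _ _ H).
  - apply ImpL_concl_inv_nonjunctive in H; [exact H | discriminate ..].
  - apply AndImpL_inv, IHx1, IHx2 in H; [exact H | intros Y HY; apply HC; simpl in *; lia ..].
  - apply OrImpL_inv, IHx1 in H; [| intros Y HY; apply HC; simpl in *; lia].
    apply (fun H' => prv_perm _ _ _ _ H' (perm_swap _ _ _)), IHx2 in H;
      [| intros Y HY; apply HC; simpl in *; lia].
    apply HC; [simpl; pose proof (weight_pos x1); lia | exact H].
  - exact (ImpImpL_concl_inv _ _ _ _ _ H).
  - exact (BoxImpL_concl_inv _ _ _ _ H).
Qed.

Lemma ImpImpL_inv_of_mp c d e : mp_adm d e ->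
  forall G chi, prv false (Imp (Imp c d) e :: G) chi -> prv false (c :: Imp d e :: G) chi.
Proof.
  intros HMP G chi H.
  apply (prv_replace_left false (Imp (Imp c d) e) [c; Imp d e]) with (D := Imp (Imp c d) e :: G);
    try (intros; discriminate); auto.
  intros a b d' H' chi' E Hp1 Hp2. injection E as -> -> ->.
  apply ImpR_inv in Hp1.
  eapply prv_perm with (D := Imp b d' :: a :: H'); [| solve_perm].
  apply HMP.
  - eapply prv_perm; [exact Hp1 |]. solve_perm.
  - eapply prv_perm; [apply (prv_weaken _ _ _ a Hp2) |]. solve_perm.
Qed.

Lemma contr_AndL a b G chi : contr_adm a -> contr_adm b ->
  prv false (And a b :: a :: b :: G) chi -> prv false (And a b :: G) chi.
Proof.
  intros Ha Hb H. apply AndL_inv in H.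
  eapply AndL with (G := G) (a := a) (b := b); [reflexivity |].
  apply (contr_adm_perm a _ (b :: b :: G)) in H; [| exact Ha | solve_perm].
  apply (contr_adm_perm b _ (a :: G)) in H; [| exact Hb | solve_perm].
  eapply prv_perm; [exact H | solve_perm].
Qed.

Lemma contr_OrL a b G chi : contr_adm a -> contr_adm b ->
  prv false (Or a b :: a :: G) chi -> prv false (Or a b :: b :: G) chi ->
  prv false (Or a b :: G) chi.
Proof.
  intros Ha Hb H1 H2.
  eapply OrL with (G := G) (a := a) (b := b); [reflexivity | apply Ha | apply Hb].
  - apply (OrL_inv1 a b (a :: G)). exact H1.
  - apply (OrL_inv2 a b (b :: G)). exact H2.
Qed.

Lemma contr_VarImpL p a K chi : contr_adm a ->
  prv false (Var p :: a :: Imp (Var p) a :: K) chi ->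
  prv false (Var p :: Imp (Var p) a :: K) chi.
Proof.
  intros Ha H.
  eapply PImpL with (G := K) (p := p) (a := a); [reflexivity |].
  apply (fun H' => prv_perm _ _ (Imp (Var p) a :: a :: Var p :: K) _ H') in H; [| solve_perm].
  apply VarImpL_concl_inv, Ha in H. eapply prv_perm; [exact H | solve_perm].
Qed.

Lemma contr_BoxImpL a b K chi : contr_adm b ->
  prv false (Box a :: b :: Imp (Box a) b :: map unbox K) a ->
  prv false (b :: Imp (Box a) b :: K) chi -> prv false (Imp (Box a) b :: K) chi.
Proof.
  intros Hb H1 H2. apply BoxImpL_unbox.
  - apply (fun H' => prv_perm _ _ (Imp (Box a) b :: b :: Box a :: map unbox K) _ H') in H1;
      [| solve_perm].
    apply BoxImpL_concl_inv, Hb in H1. eapply prv_perm; [exact H1 | solve_perm].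
  - apply Hb, (BoxImpL_concl_inv a). eapply prv_perm; [exact H2 | solve_perm].
Qed.

Lemma contr_AndImpL a b c K d : contr_adm (Imp a (Imp b c)) ->
  prv false (Imp a (Imp b c) :: Imp (And a b) c :: K) d -> prv false (Imp (And a b) c :: K) d.
Proof.
  intros Habc H. eapply AndImpL with (G := K) (a := a) (b := b) (c := c); [reflexivity |].
  apply Habc, AndImpL_inv. eapply prv_perm; [exact H | solve_perm].
Qed.

Lemma contr_OrImpL a b c K d : contr_adm (Imp a c) -> contr_adm (Imp b c) ->
  prv false (Imp a c :: Imp b c :: Imp (Or a b) c :: K) d -> prv false (Imp (Or a b) c :: K) d.
Proof.
  intros Hac Hbc H. eapply OrImpL with (G := K) (a := a) (b := b) (c := c); [reflexivity |].
  apply (fun H' => prv_perm _ _ (Imp (Or a b) c :: Imp a c :: Imp b c :: K) _ H') in H;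
    [| solve_perm].
  apply OrImpL_inv in H.
  apply (contr_adm_perm (Imp a c) _ (Imp b c :: Imp b c :: K)) in H; [| exact Hac | solve_perm].
  apply (contr_adm_perm (Imp b c) _ (Imp a c :: K)) in H; [| exact Hbc | solve_perm].
  eapply prv_perm; [exact H | solve_perm].
Qed.

Lemma contr_ImpImpL a b c K d :
  contr_adm a -> contr_adm (Imp b c) -> contr_adm c -> mp_adm b c ->
  prv false (Imp b c :: Imp (Imp a b) c :: K) (Imp a b) ->
  prv false (c :: Imp (Imp a b) c :: K) d -> prv false (Imp (Imp a b) c :: K) d.
Proof.
  intros Ha Hbc Hc Hmp H1 H2.
  eapply ImpImpL with (G := K) (a := a) (b := b) (c := c); [reflexivity | |].
  - apply ImpR. apply ImpR_inv in H1.
    apply (fun H' => prv_perm _ _ (Imp (Imp a b) c :: a :: Imp b c :: K) _ H') in H1;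
      [| solve_perm].
    apply (ImpImpL_inv_of_mp a b c Hmp) in H1.
    apply (contr_adm_perm a _ (Imp b c :: Imp b c :: K)) in H1; [| exact Ha | solve_perm].
    apply (contr_adm_perm (Imp b c) _ (a :: K)) in H1; [| exact Hbc | solve_perm].
    eapply prv_perm; [exact H1 | solve_perm].
  - apply Hc, (ImpImpL_concl_inv a b). eapply prv_perm; [exact H2 | solve_perm].
Qed.

Lemma perm_same_head_dup D (X : form) G G' :
  Permutation D (X :: G') -> Permutation D (X :: X :: G) -> Permutation G' (X :: G).
Proof. intros H1 H2. apply (Permutation_cons_inv (a := X)). now rewrite <- H1, H2. Qed.

Lemma perm_distinct_head_dup D (Y X : form) G G' :
  Permutation D (Y :: G') -> Permutation D (X :: X :: G) -> Y <> X ->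
  exists K, Permutation G' (X :: X :: K) /\ Permutation G (Y :: K).
Proof.
  intros H1 H2 Hne.
  destruct (perm_distinct_heads _ _ _ _ _ H1 H2 Hne) as (K1 & HK1 & HK2).
  destruct (Permutation_cons_cons_inv _ _ _ _ HK1) as [[E _] | [_ (K & HK3 & HK4)]];
    [congruence |].
  exists K. split; [rewrite HK2, HK4; reflexivity | exact HK3].
Qed.

Lemma perm_distinct_heads2_dup D (Y Z X : form) G G' :
  Permutation D (Y :: Z :: G') -> Permutation D (X :: X :: G) -> Y <> X -> Z <> X ->
  exists K, Permutation G' (X :: X :: K) /\ Permutation G (Y :: Z :: K).
Proof.
  intros H1 H2 Hne1 Hne2.
  destruct (perm_distinct_head_dup _ _ _ _ _ H1 H2 Hne1) as (K1 & HK1 & HK2).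
  destruct (perm_distinct_head_dup _ _ _ _ _ (Permutation_refl _) HK1 Hne2) as (K & HK3 & HK4).
  exists K. split; [exact HK3 | rewrite HK2, HK4; reflexivity].
Qed.

Section ContractionAndMP.

Variable N : nat.
Hypothesis contr_below : forall X, weight X < N -> contr_adm X.
Hypothesis mp_below : forall d B, weight d + weight B < N -> mp_adm d B.

Lemma contr_adm_at X : weight X <= N -> contr_adm X.
Proof.
  intros HN.
  assert (HC : forall Y, weight Y < weight X -> contr_adm Y)
    by (intros Y HY; apply contr_below; lia).
  enough (Hgen : forall D E, prv false D E ->
                 forall G, Permutation D (X :: X :: G) -> prv false (X :: G) E)
    by (intros G E H; exact (Hgen _ _ H G (Permutation_refl _))).
  induction 1; intros G0 HP.
  - destruct (form_eq_dec Bot X) as [<- | Hne]; [eapply BotL; reflexivity |].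
    destruct (perm_distinct_head_dup _ _ _ _ _ H HP Hne) as (K & HK1 & HK2).
    eapply BotL with (G := X :: K). solve_perm.
  - destruct (form_eq_dec (Var p) X) as [<- | Hne]; [eapply IdP; reflexivity |].
    destruct (perm_distinct_head_dup _ _ _ _ _ H HP Hne) as (K & HK1 & HK2).
    eapply IdP with (G := X :: K). solve_perm.
  - destruct (form_eq_dec (And a b) X) as [<- | Hne].
    + pose proof (perm_same_head_dup _ _ _ _ H HP).
      apply contr_AndL; [apply HC; simpl; lia .. |]. eapply prv_perm; [exact H0 | solve_perm].
    + destruct (perm_distinct_head_dup _ _ _ _ _ H HP Hne) as (K & HK1 & HK2).
      eapply AndL with (G := X :: K) (a := a) (b := b). solve_perm.
      eapply prv_perm; [apply (IHprv (a :: b :: K)); solve_perm | solve_perm].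
  - apply AndR; auto.
  - destruct (form_eq_dec (Or a b) X) as [<- | Hne].
    + pose proof (perm_same_head_dup _ _ _ _ H HP).
      apply contr_OrL; [apply HC; simpl; lia .. | |].
      * eapply prv_perm; [exact H0 | solve_perm].
      * eapply prv_perm; [exact H1 | solve_perm].
    + destruct (perm_distinct_head_dup _ _ _ _ _ H HP Hne) as (K & HK1 & HK2).
      eapply OrL with (G := X :: K) (a := a) (b := b). solve_perm.
      * eapply prv_perm; [apply (IHprv1 (a :: K)); solve_perm | solve_perm].
      * eapply prv_perm; [apply (IHprv2 (b :: K)); solve_perm | solve_perm].
  - apply OrR1; auto.
  - apply OrR2; auto.
  - destruct (form_eq_dec (Var p) X) as [<- | Hne1].
    + assert (HP' : Permutation (Imp (Var p) a :: G) (Var p :: G0))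
        by (apply (Permutation_cons_inv (a := Var p)); rewrite <- H, HP; reflexivity).
      destruct (Permutation_cons_cons_inv _ _ _ _ HP') as [[E _] | [_ (K & HK1 & HK2)]];
        [discriminate |].
      eapply PImpL with (G := K) (p := p) (a := a). solve_perm.
      eapply prv_perm; [apply (IHprv (a :: K)); solve_perm | solve_perm].
    + destruct (form_eq_dec (Imp (Var p) a) X) as [<- | Hne2].
      * pose proof (perm_distinct_head_dup _ _ _ _ _ H HP ltac:(discriminate)) as (K & HK1 & HK2).
        assert (HK : Permutation G (Imp (Var p) a :: K)).
        { apply (Permutation_cons_inv (a := Imp (Var p) a)).
          apply (Permutation_cons_inv (a := Var p)). rewrite HK1. solve_perm. }
        eapply prv_perm; [apply (contr_VarImpL p a K); [apply HC; simpl; lia |] |].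
        -- eapply prv_perm; [exact H0 | solve_perm].
        -- solve_perm.
      * destruct (perm_distinct_heads2_dup _ _ _ _ _ _ H HP Hne1 Hne2) as (K & HK1 & HK2).
        eapply PImpL with (G := X :: K) (p := p) (a := a). solve_perm.
        eapply prv_perm; [apply (IHprv (Var p :: a :: K)); solve_perm | solve_perm].
  - apply ImpR. eapply prv_perm; [apply (IHprv (a :: G0)); solve_perm | solve_perm].
  - destruct (form_eq_dec (Imp (Box a) b) X) as [<- | Hne].
    + pose proof (perm_same_head_dup _ _ _ _ H0 HP) as HG.
      assert (Hm : Permutation (Phi ++ G) (Imp (Box a) b :: map unbox G0)).
      { rewrite <- (map_unbox_split _ _ H). exact (Permutation_map unbox HG). }
      apply contr_BoxImpL; [apply HC; simpl; lia | |].
      * eapply prv_perm; [exact H1 | solve_perm].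
      * eapply prv_perm; [exact H2 | solve_perm].
    + destruct (perm_distinct_head_dup _ _ _ _ _ H0 HP Hne) as (K & HK1 & HK2).
      assert (Hm : Permutation (Phi ++ G) (unbox X :: unbox X :: map unbox K)).
      { rewrite <- (map_unbox_split _ _ H). exact (Permutation_map unbox HK1). }
      eapply prv_perm with (D := Imp (Box a) b :: X :: K); [| solve_perm].
      apply BoxImpL_unbox.
      * simpl. destruct (box_or_unbox_id X) as [(h & ->) | EX].
        -- simpl in *. eapply prv_perm; [apply (HC h ltac:(lia) (Box a :: b :: map unbox K)) |].
           ++ eapply prv_perm; [exact H1 | solve_perm].
           ++ solve_perm.
        -- rewrite EX in *.
           eapply prv_perm; [apply (IHprv1 (Box a :: b :: map unbox K)); solve_perm | solve_perm].
      * eapply prv_perm; [apply (IHprv2 (b :: K)); solve_perm | solve_perm].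
  - apply SLtR_unbox.
    assert (Hm : Permutation (Phi ++ G) (unbox X :: unbox X :: map unbox G0)).
    { rewrite <- (perm_map_unbox _ _ _ H0 H). exact (Permutation_map unbox HP). }
    simpl. destruct (box_or_unbox_id X) as [(h & ->) | EX].
    + simpl in *. eapply prv_perm; [apply (HC h ltac:(lia) (Box a :: map unbox G0)) |].
      * eapply prv_perm; [exact H1 | solve_perm].
      * solve_perm.
    + rewrite EX in *. eapply prv_perm; [apply (IHprv (Box a :: map unbox G0)); solve_perm | solve_perm].
  - destruct (form_eq_dec (Imp (And a b) c) X) as [<- | Hne].
    + pose proof (perm_same_head_dup _ _ _ _ H HP).
      apply contr_AndImpL; [apply HC; simpl; lia | eapply prv_perm; [exact H0 | solve_perm]].
    + destruct (perm_distinct_head_dup _ _ _ _ _ H HP Hne) as (K & HK1 & HK2).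
      eapply AndImpL with (G := X :: K) (a := a) (b := b) (c := c). solve_perm.
      eapply prv_perm; [apply (IHprv (Imp a (Imp b c) :: K)); solve_perm | solve_perm].
  - destruct (form_eq_dec (Imp (Or a b) c) X) as [<- | Hne].
    + pose proof (perm_same_head_dup _ _ _ _ H HP).
      pose proof (weight_pos a); pose proof (weight_pos b).
      apply contr_OrImpL; [apply HC; simpl; lia .. | eapply prv_perm; [exact H0 | solve_perm]].
    + destruct (perm_distinct_head_dup _ _ _ _ _ H HP Hne) as (K & HK1 & HK2).
      eapply OrImpL with (G := X :: K) (a := a) (b := b) (c := c). solve_perm.
      eapply prv_perm; [apply (IHprv (Imp a c :: Imp b c :: K)); solve_perm | solve_perm].
  - destruct (form_eq_dec (Imp (Imp a b) c) X) as [<- | Hne].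
    + pose proof (perm_same_head_dup _ _ _ _ H HP).
      apply contr_ImpImpL; [apply HC; simpl; lia .. | apply mp_below; simpl in *; lia | |].
      * eapply prv_perm; [exact H0 | solve_perm].
      * eapply prv_perm; [exact H1 | solve_perm].
    + destruct (perm_distinct_head_dup _ _ _ _ _ H HP Hne) as (K & HK1 & HK2).
      eapply ImpImpL with (G := X :: K) (a := a) (b := b) (c := c). solve_perm.
      * eapply prv_perm; [apply (IHprv1 (Imp b c :: K)); solve_perm | solve_perm].
      * eapply prv_perm; [apply (IHprv2 (c :: K)); solve_perm | solve_perm].
  - discriminate.
Qed.

Lemma mp_AndR a b B G E : weight (And a b) + weight B <= N ->
  prv false (Imp a (Imp b B) :: G) a -> prv false (Imp a (Imp b B) :: G) b ->
  prv false (B :: G) E -> prv false (Imp (And a b) B :: G) E.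
Proof.
  simpl; intros HN Ha Hb HE.
  eapply AndImpL with (G := G) (a := a) (b := b) (c := B); [reflexivity |].
  apply (mp_below a (Imp b B)); [simpl; lia | exact Ha |].
  apply (mp_below b B); [lia | | exact HE].
  apply (ImpL_concl_inv_below a (Imp b B)); [| exact Hb].
  intros Y HY; apply contr_below; simpl in *; lia.
Qed.

Lemma mp_OrR1 a b B G E : weight (Or a b) + weight B <= N ->
  prv false (Imp (Or a b) B :: G) a -> prv false (B :: G) E -> prv false (Imp (Or a b) B :: G) E.
Proof.
  simpl; intros HN Ha HE.
  eapply OrImpL with (G := G) (a := a) (b := b) (c := B); [reflexivity |].
  apply (mp_below a B); [lia | apply OrImpL_inv, Ha |].
  eapply prv_perm; [apply (prv_weaken _ _ _ (Imp b B) HE) | solve_perm].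
Qed.

Lemma mp_OrR2 a b B G E : weight (Or a b) + weight B <= N ->
  prv false (Imp (Or a b) B :: G) b -> prv false (B :: G) E -> prv false (Imp (Or a b) B :: G) E.
Proof.
  simpl; intros HN Hb HE.
  eapply OrImpL with (G := G) (a := a) (b := b) (c := B); [reflexivity |].
  eapply prv_perm with (D := Imp b B :: Imp a B :: G); [| solve_perm].
  apply (mp_below b B); [lia | |].
  - eapply prv_perm; [apply OrImpL_inv, Hb | solve_perm].
  - eapply prv_perm; [apply (prv_weaken _ _ _ (Imp a B) HE) | solve_perm].
Qed.

Lemma mp_ImpR a b B G E : weight (Imp a b) + weight B <= N ->
  prv false (a :: Imp (Imp a b) B :: G) b -> prv false (B :: G) E ->
  prv false (Imp (Imp a b) B :: G) E.
Proof.
  simpl; intros HN Hab HE.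
  apply (fun H => prv_perm _ _ (Imp (Imp a b) B :: a :: G) _ H) in Hab; [| solve_perm].
  apply (ImpImpL_inv_of_mp a b B) in Hab; [| apply mp_below; lia].
  eapply ImpImpL with (G := G) (a := a) (b := b) (c := B); [reflexivity | | exact HE].
  apply ImpR, (contr_below a); [lia |]. eapply prv_perm; [exact Hab | solve_perm].
Qed.

Lemma mp_adm_at d B : weight d + weight B <= N -> mp_adm d B.
Proof.
  intros HN.
  assert (HC : forall X, weight X < weight d + weight B -> contr_adm X)
    by (intros X HX; apply contr_below; lia).
  enough (Hgen : forall n D G E, prvh n D d -> Permutation D (Imp d B :: G) ->
                 prv false (B :: G) E -> prv false (Imp d B :: G) E)
    by (intros G E H1 H2; destruct (prv_prvh _ _ H1) as [n Hn]; eapply Hgen; eauto).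
  induction n as [n IHn] using lt_wf_ind.
  intros D0 G0 E Hh HP HE.
  inversion Hh; subst.
  - split_heads H HP. eapply BotL with (G := Imp d B :: K). solve_perm.
  - split_heads H HP.
    eapply PImpL with (G := K) (p := p) (a := B). solve_perm.
    eapply prv_perm; [exact HE | solve_perm].
  - split_heads H HP.
    assert (HE' : prv false (B :: a :: b :: K) E).
    { eapply prv_perm; [apply (AndL_inv a b (B :: K)) | solve_perm].
      eapply prv_perm; [exact HE | solve_perm]. }
    pose proof (IHn n0 ltac:(lia) _ (a :: b :: K) E H0 ltac:(solve_perm) HE') as R.
    eapply AndL with (G := Imp d B :: K) (a := a) (b := b). solve_perm.
    eapply prv_perm; [exact R | solve_perm].
  - apply mp_AndR; [exact HN | | | exact HE]; apply AndImpL_inv.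
    + exact (prvh_prv _ _ _ (prvh_perm _ _ _ _ H HP)).
    + exact (prvh_prv _ _ _ (prvh_perm _ _ _ _ H0 HP)).
  - split_heads H HP.
    assert (HE' : prv false (Or a b :: B :: K) E) by (eapply prv_perm; [exact HE | solve_perm]).
    pose proof (IHn n0 ltac:(lia) _ (a :: K) E H0 ltac:(solve_perm)
       ltac:(eapply prv_perm; [apply (OrL_inv1 _ _ _ _ HE') | solve_perm])) as R1.
    pose proof (IHn n0 ltac:(lia) _ (b :: K) E H1 ltac:(solve_perm)
       ltac:(eapply prv_perm; [apply (OrL_inv2 _ _ _ _ HE') | solve_perm])) as R2.
    eapply OrL with (G := Imp d B :: K) (a := a) (b := b). solve_perm.
    + eapply prv_perm; [exact R1 | solve_perm].
    + eapply prv_perm; [exact R2 | solve_perm].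
  - apply mp_OrR1; [exact HN | exact (prvh_prv _ _ _ (prvh_perm _ _ _ _ H HP)) | exact HE].
  - apply mp_OrR2; [exact HN | exact (prvh_prv _ _ _ (prvh_perm _ _ _ _ H HP)) | exact HE].
  - destruct (form_eq_dec (Imp d B) (Imp (Var p) a)) as [E1 | Hne].
    + injection E1 as -> ->.
      assert (HG : Permutation G0 (Var p :: G))
        by (apply (Permutation_cons_inv (a := Imp (Var p) a)); rewrite <- HP, H; apply perm_swap).
      eapply PImpL with (G := G) (p := p) (a := a). solve_perm.
      eapply prv_perm; [exact HE | solve_perm].
    + destruct (perm_distinct_heads2 _ _ _ _ _ _ H HP ltac:(discriminate) (not_eq_sym Hne))
        as (K & HK1 & HK2).
      assert (HE' : prv false (a :: B :: Var p :: K) E).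
      { apply (VarImpL_concl_inv p). eapply prv_perm; [exact HE | solve_perm]. }
      pose proof (IHn n0 ltac:(lia) _ (Var p :: a :: K) E H0 ltac:(solve_perm)
        ltac:(eapply prv_perm; [exact HE' | solve_perm])) as R.
      eapply PImpL with (G := Imp d B :: K) (p := p) (a := a). solve_perm.
      eapply prv_perm; [exact R | solve_perm].
  - apply mp_ImpR; [exact HN | | exact HE].
    eapply prv_perm; [exact (prvh_prv _ _ _ H) | solve_perm].
  - destruct (form_eq_dec (Imp d B) (Imp (Box a) b)) as [E1 | Hne].
    + injection E1 as -> ->.
      pose proof (perm_same_head _ _ _ _ H HP) as HG.
      apply BoxImpL_unbox; [| exact HE].
      eapply prv_perm; [apply (prvh_prv _ _ _ H0) |].
      do 2 apply perm_skip. apply Permutation_map. symmetry; exact HG.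
    + destruct (perm_distinct_heads _ _ _ _ _ H HP (not_eq_sym Hne)) as (K & HK1 & HK2).
      assert (HE' : prv false (b :: B :: K) E).
      { apply (BoxImpL_concl_inv a). eapply prv_perm; [exact HE | solve_perm]. }
      pose proof (IHn n0 ltac:(lia) _ (b :: K) E H1 ltac:(solve_perm)
        ltac:(eapply prv_perm; [exact HE' | solve_perm])) as R.
      eapply prv_perm with (D := Imp (Box a) b :: Imp d B :: K); [| solve_perm].
      apply BoxImpL_unbox.
      * eapply prv_perm; [apply (prvh_prv _ _ _ H0) |].
        apply (Permutation_map unbox) in HK2. simpl in *. solve_perm.
      * eapply prv_perm; [exact R | solve_perm].
  - apply (Permutation_map unbox) in HP. simpl in HP.
    apply BoxImpL_unbox; [| exact HE].
    eapply prv_perm with (D := B :: Box a :: map unbox G0); [| solve_perm].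
    apply (BoxImpL_concl_inv a).
    eapply prv_perm; [exact (prvh_prv _ _ _ H) | solve_perm].
  - destruct (form_eq_dec (Imp d B) (Imp (And a b) c)) as [E1 | Hne].
    + injection E1 as -> ->.
      pose proof (perm_same_head _ _ _ _ H HP) as HG.
      pose proof (prv_perm _ _ (Imp a (Imp b c) :: G0) _ (prvh_prv _ _ _ H0) ltac:(solve_perm)) as P.
      apply mp_AndR; [exact HN | eapply AndR_inv1; exact P | eapply AndR_inv2; exact P | exact HE].
    + destruct (perm_distinct_heads _ _ _ _ _ H HP (not_eq_sym Hne)) as (K & HK1 & HK2).
      assert (HE' : prv false (Imp a (Imp b c) :: B :: K) E).
      { apply AndImpL_inv. eapply prv_perm; [exact HE | solve_perm]. }
      pose proof (IHn n0 ltac:(lia) _ (Imp a (Imp b c) :: K) E H0 ltac:(solve_perm)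
        ltac:(eapply prv_perm; [exact HE' | solve_perm])) as R.
      eapply AndImpL with (G := Imp d B :: K) (a := a) (b := b) (c := c). solve_perm.
      eapply prv_perm; [exact R | solve_perm].
  - destruct (form_eq_dec (Imp d B) (Imp (Or a b) c)) as [E1 | Hne].
    + (* Weakening the premise [a → c, b → c, Γ ⊢ a ∨ b] by [d → B] preserves its
         height, so the induction hypothesis applies to it. *)
      injection E1 as -> ->.
      pose proof (perm_same_head _ _ _ _ H HP) as HG.
      pose proof (prvh_weaken _ _ _ (Imp (Or a b) c) H0) as Hw.
      pose proof (IHn n0 ltac:(lia) _ (Imp a c :: Imp b c :: G0) E Hw ltac:(solve_perm)
        ltac:(eapply prv_perm;
               [exact (prv_weaken _ _ _ (Imp a c) (prv_weaken _ _ _ (Imp b c) HE)) | solve_perm])) as R.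
      apply OrImpL_inv in R. pose proof (weight_pos a); pose proof (weight_pos b).
      eapply OrImpL with (G := G0) (a := a) (b := b) (c := c); [reflexivity |].
      apply (contr_adm_perm (Imp a c) _ (Imp b c :: Imp b c :: G0)) in R;
        [| apply HC; simpl; lia | solve_perm].
      apply (contr_adm_perm (Imp b c) _ (Imp a c :: G0)) in R;
        [| apply HC; simpl; lia | solve_perm].
      eapply prv_perm; [exact R | solve_perm].
    + destruct (perm_distinct_heads _ _ _ _ _ H HP (not_eq_sym Hne)) as (K & HK1 & HK2).
      assert (HE' : prv false (Imp a c :: Imp b c :: B :: K) E).
      { apply OrImpL_inv. eapply prv_perm; [exact HE | solve_perm]. }
      pose proof (IHn n0 ltac:(lia) _ (Imp a c :: Imp b c :: K) E H0 ltac:(solve_perm)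
        ltac:(eapply prv_perm; [exact HE' | solve_perm])) as R.
      eapply OrImpL with (G := Imp d B :: K) (a := a) (b := b) (c := c). solve_perm.
      eapply prv_perm; [exact R | solve_perm].
  - destruct (form_eq_dec (Imp d B) (Imp (Imp a b) c)) as [E1 | Hne].
    + injection E1 as -> ->.
      pose proof (perm_same_head _ _ _ _ H HP) as HG.
      eapply ImpImpL with (G := G0) (a := a) (b := b) (c := c); [reflexivity | | exact HE].
      eapply prv_perm; [apply (prvh_prv _ _ _ H0) | solve_perm].
    + destruct (perm_distinct_heads _ _ _ _ _ H HP (not_eq_sym Hne)) as (K & HK1 & HK2).
      assert (HE' : prv false (c :: B :: K) E).
      { apply (ImpImpL_concl_inv a b). eapply prv_perm; [exact HE | solve_perm]. }
      pose proof (IHn n0 ltac:(lia) _ (c :: K) E H1 ltac:(solve_perm)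
        ltac:(eapply prv_perm; [exact HE' | solve_perm])) as R.
      eapply ImpImpL with (G := Imp d B :: K) (a := a) (b := b) (c := c). solve_perm.
      * eapply prv_perm; [apply (prvh_prv _ _ _ H0) | solve_perm].
      * eapply prv_perm; [exact R | solve_perm].
Qed.

End ContractionAndMP.

Lemma contr_mp_adm N :
  (forall X, weight X <= N -> contr_adm X) /\ (forall d B, weight d + weight B <= N -> mp_adm d B).
Proof.
  induction N as [N IHN] using lt_wf_ind.
  assert (HC : forall X, weight X < N -> contr_adm X)
    by (intros X HX; exact (proj1 (IHN _ HX) X (le_n _))).
  assert (HM : forall d B, weight d + weight B < N -> mp_adm d B)
    by (intros d B HX; exact (proj2 (IHN _ HX) d B (le_n _))).
  split; [apply (contr_adm_at N HC HM) | apply (mp_adm_at N HC HM)].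
Qed.

Lemma prv_contract X G E : prv false (X :: X :: G) E -> prv false (X :: G) E.
Proof. exact (proj1 (contr_mp_adm (weight X)) X (le_n _) G E). Qed.

Lemma prv_mp d B G E :
  prv false (Imp d B :: G) d -> prv false (B :: G) E -> prv false (Imp d B :: G) E.
Proof. exact (proj2 (contr_mp_adm (weight d + weight B)) d B (le_n _) G E). Qed.

Lemma ImpL_concl_inv x e G chi : prv false (Imp x e :: G) chi -> prv false (e :: G) chi.
Proof. apply ImpL_concl_inv_below. intros Y _ G' E. apply prv_contract. Qed.

Lemma ImpImpL_inv c d e G chi :
  prv false (Imp (Imp c d) e :: G) chi -> prv false (c :: Imp d e :: G) chi.
Proof. apply ImpImpL_inv_of_mp. intros G' E. apply prv_mp. Qed.

(** * Cut *)

(* The goal counts one weight level above a context formula, and the base 4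
   lets a formula outweigh three lighter ones: the left premise of (→→L)
   trades [(a → b) → c] for [a], [b → c] and the goal [b]. *)
Definition ctx_measure (L : list form) : nat :=
  fold_right (fun A s => 4 ^ weight A + s) 0 L.

Definition seq_measure (L : list form) (c : form) : nat :=
  ctx_measure L + 4 ^ S (weight c).

Lemma ctx_measure_cons A L : ctx_measure (A :: L) = 4 ^ weight A + ctx_measure L.
Proof. reflexivity. Qed.

Lemma seq_measure_perm L L' c : Permutation L L' -> seq_measure L c = seq_measure L' c.
Proof.
  intros HP. unfold seq_measure. f_equal.
  induction HP; simpl; lia.
Qed.

Lemma ctx_measure_unbox L : ctx_measure (map unbox L) <= ctx_measure L.
Proof.
  induction L as [|A L IH]; simpl; [lia |].
  enough (4 ^ weight (unbox A) <= 4 ^ weight A) by lia.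
  apply Nat.pow_le_mono_r; [lia | destruct A; simpl; lia].
Qed.

Lemma pow4_lt m n : m < n -> 4 * 4 ^ m <= 4 ^ n /\ 1 <= 4 ^ m.
Proof.
  intros H. split.
  - rewrite <- Nat.pow_succ_r'. apply Nat.pow_le_mono_r; lia.
  - apply Nat.neq_0_lt_0, Nat.pow_nonzero. lia.
Qed.

Ltac measure_lia := unfold seq_measure; rewrite ?ctx_measure_cons; simpl weight in *; lia.

Lemma measure_AndR1 G a b : seq_measure G a < seq_measure G (And a b).
Proof. pose proof (pow4_lt (S (weight a)) (S (weight (And a b)))). measure_lia. Qed.

Lemma measure_AndR2 G a b : seq_measure G b < seq_measure G (And a b).
Proof. pose proof (pow4_lt (S (weight b)) (S (weight (And a b)))). measure_lia. Qed.

Lemma measure_OrR1 G a b : seq_measure G a < seq_measure G (Or a b).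
Proof.
  pose proof (weight_pos b). pose proof (pow4_lt (S (weight a)) (S (weight (Or a b)))).
  measure_lia.
Qed.

Lemma measure_OrR2 G a b : seq_measure G b < seq_measure G (Or a b).
Proof.
  pose proof (weight_pos a). pose proof (pow4_lt (S (weight b)) (S (weight (Or a b)))).
  measure_lia.
Qed.

Lemma measure_ImpR G a b : seq_measure (a :: G) b < seq_measure G (Imp a b).
Proof.
  pose proof (pow4_lt (weight a) (S (weight (Imp a b)))).
  pose proof (pow4_lt (S (weight b)) (S (weight (Imp a b)))). measure_lia.
Qed.

Lemma measure_SLtR G a : seq_measure (Box a :: map unbox G) a < seq_measure G (Box a).
Proof.
  pose proof (ctx_measure_unbox G). pose proof (pow4_lt (weight (Box a)) (S (weight (Box a)))).
  unfold seq_measure. rewrite ctx_measure_cons. simpl weight in *.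
  replace (weight a + 1) with (S (weight a)) in * by lia. lia.
Qed.

Lemma measure_AndL K a b c : seq_measure (a :: b :: K) c < seq_measure (And a b :: K) c.
Proof.
  pose proof (pow4_lt (weight a) (weight (And a b))).
  pose proof (pow4_lt (weight b) (weight (And a b))). measure_lia.
Qed.

Lemma measure_OrL1 K a b c : seq_measure (a :: K) c < seq_measure (Or a b :: K) c.
Proof. pose proof (weight_pos b). pose proof (pow4_lt (weight a) (weight (Or a b))). measure_lia. Qed.

Lemma measure_OrL2 K a b c : seq_measure (b :: K) c < seq_measure (Or a b :: K) c.
Proof. pose proof (weight_pos a). pose proof (pow4_lt (weight b) (weight (Or a b))). measure_lia. Qed.

Lemma measure_PImpL K p e c :
  seq_measure (Var p :: e :: K) c < seq_measure (Var p :: Imp (Var p) e :: K) c.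
Proof. pose proof (pow4_lt (weight e) (weight (Imp (Var p) e))). measure_lia. Qed.

Lemma measure_AndImpL K a b c d :
  seq_measure (Imp a (Imp b c) :: K) d < seq_measure (Imp (And a b) c :: K) d.
Proof. pose proof (pow4_lt (weight (Imp a (Imp b c))) (weight (Imp (And a b) c))). measure_lia. Qed.

Lemma measure_OrImpL K a b c d :
  seq_measure (Imp a c :: Imp b c :: K) d < seq_measure (Imp (Or a b) c :: K) d.
Proof.
  pose proof (weight_pos a). pose proof (weight_pos b).
  pose proof (pow4_lt (weight (Imp a c)) (weight (Imp (Or a b) c))).
  pose proof (pow4_lt (weight (Imp b c)) (weight (Imp (Or a b) c))). measure_lia.
Qed.

Lemma measure_ImpImpL1 K a b c d :
  seq_measure (a :: Imp b c :: K) b < seq_measure (Imp (Imp a b) c :: K) d.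
Proof.
  pose proof (weight_pos c).
  pose proof (pow4_lt (weight a) (weight (Imp (Imp a b) c))).
  pose proof (pow4_lt (weight (Imp b c)) (weight (Imp (Imp a b) c))).
  pose proof (pow4_lt (S (weight b)) (weight (Imp (Imp a b) c))). measure_lia.
Qed.

Lemma measure_ImpImpL2 K a b c d : seq_measure (c :: K) d < seq_measure (Imp (Imp a b) c :: K) d.
Proof. pose proof (pow4_lt (weight c) (weight (Imp (Imp a b) c))). measure_lia. Qed.

Lemma measure_BoxImpL1 K a b d :
  seq_measure (Box a :: b :: map unbox K) a < seq_measure (Imp (Box a) b :: K) d.
Proof.
  pose proof (ctx_measure_unbox K). pose proof (weight_pos b).
  pose proof (pow4_lt (weight (Box a)) (weight (Imp (Box a) b))).
  pose proof (pow4_lt (weight b) (weight (Imp (Box a) b))).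
  unfold seq_measure. rewrite !ctx_measure_cons. simpl weight in *.
  replace (weight a + 1) with (S (weight a)) in * by lia. lia.
Qed.

Lemma measure_BoxImpL2 K a b d : seq_measure (b :: K) d < seq_measure (Imp (Box a) b :: K) d.
Proof. pose proof (pow4_lt (weight b) (weight (Imp (Box a) b))). measure_lia. Qed.

Definition cut_adm (A : form) : Prop :=
  forall D chi, prv false D A -> prv false (A :: D) chi -> prv false D chi.

Lemma cut_AndR a b D chi : cut_adm a -> cut_adm b ->
  prv false D a -> prv false D b -> prv false (And a b :: D) chi -> prv false D chi.
Proof.
  intros Ha Hb HLa HLb HR. apply AndL_inv in HR.
  apply (Ha D chi HLa), (Hb _ _ (prv_weaken _ _ _ a HLb)).
  eapply prv_perm; [exact HR | solve_perm].
Qed.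

Lemma cut_OrR1 a b D chi : cut_adm a ->
  prv false D a -> prv false (Or a b :: D) chi -> prv false D chi.
Proof. intros Ha HL HR. exact (Ha D chi HL (OrL_inv1 _ _ _ _ HR)). Qed.

Lemma cut_OrR2 a b D chi : cut_adm b ->
  prv false D b -> prv false (Or a b :: D) chi -> prv false D chi.
Proof. intros Hb HL HR. exact (Hb D chi HL (OrL_inv2 _ _ _ _ HR)). Qed.

Lemma cut_VarImp p a G chi : cut_adm a ->
  prv false (Var p :: Var p :: G) a -> prv false (Var p :: a :: G) chi ->
  prv false (Var p :: G) chi.
Proof.
  intros Ha HL HR. apply prv_contract in HL.
  apply (Ha _ _ HL). eapply prv_perm; [exact HR | solve_perm].
Qed.

(* The essential modal case: [□a] is first derived from the left premises by
   SLtR, and then cut away together with [b]. *)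
Lemma cut_BoxImp a b D chi : cut_adm b -> cut_adm (Box a) ->
  prv false (Box a :: D) b -> prv false (Box a :: b :: map unbox D) a ->
  prv false (b :: D) chi -> prv false D chi.
Proof.
  intros Hb HBa HL HRa HRchi.
  assert (Hbox : prv false D (Box a)).
  { apply SLtR_unbox, (Hb _ _ (prv_unbox_suffix false [Box a] D _ HL)).
    eapply prv_perm; [exact HRa | solve_perm]. }
  exact (Hb _ _ (HBa _ _ Hbox HL) HRchi).
Qed.

Lemma cut_AndImp a b c D chi : cut_adm (Imp a (Imp b c)) ->
  prv false (And a b :: D) c -> prv false (Imp a (Imp b c) :: D) chi -> prv false D chi.
Proof.
  intros Habc HL HR. apply (Habc _ _); [| exact HR].
  apply ImpR, ImpR. eapply prv_perm; [apply AndL_inv, HL | solve_perm].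
Qed.

Lemma cut_OrImp a b c D chi : cut_adm (Imp a c) -> cut_adm (Imp b c) ->
  prv false (Or a b :: D) c -> prv false (Imp a c :: Imp b c :: D) chi -> prv false D chi.
Proof.
  intros Hac Hbc HL HR.
  apply (Hac _ _ (ImpR _ _ _ _ (OrL_inv1 _ _ _ _ HL))).
  apply (Hbc _ _ (prv_weaken _ _ _ _ (ImpR _ _ _ _ (OrL_inv2 _ _ _ _ HL)))).
  eapply prv_perm; [exact HR | solve_perm].
Qed.

Lemma cut_ImpImp a b c D chi : cut_adm (Imp b c) -> cut_adm (Imp a b) -> cut_adm c ->
  prv false (Imp a b :: D) c -> prv false (Imp b c :: D) (Imp a b) ->
  prv false (c :: D) chi -> prv false D chi.
Proof.
  intros Hbc Hab Hc HL HRab HRchi.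
  assert (Hbc_D : prv false D (Imp b c)) by exact (ImpR _ _ _ _ (ImpL_concl_inv _ _ _ _ HL)).
  assert (Hab_D : prv false D (Imp a b)) by exact (Hbc _ _ Hbc_D HRab).
  exact (Hc _ _ (Hab _ _ Hab_D HL) HRchi).
Qed.

Lemma cut_box_body a0 G goal : cut_adm a0 ->
  prv false (Box a0 :: G) a0 -> prv false (a0 :: G) goal -> prv false (Box a0 :: G) goal.
Proof.
  intros Ha0 HL HR. apply (Ha0 _ _ HL).
  eapply prv_perm; [exact (prv_weaken _ _ _ (Box a0) HR) | solve_perm].
Qed.

Ltac measure_perm HK lem := rewrite (seq_measure_perm _ _ _ HK); apply lem.

(* The cut formula was introduced on the left by (→R) or SLtR, whose premises
   are the hypotheses on [a :: D] and [Box a :: map unbox D]; the analysis now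
   turns to the last rule of the right premise. *)
Lemma cut_on_right_premise A D chi :
  (forall B, weight B < weight A -> cut_adm B) ->
  (forall D' chi', seq_measure D' chi' < seq_measure D chi ->
     prv false D' A -> prv false (A :: D') chi' -> prv false D' chi') ->
  prv false D A ->
  (forall a b, A = Imp a b -> prv false (a :: D) b) ->
  (forall a, A = Box a -> prv false (Box a :: map unbox D) a) ->
  (forall a b, A <> And a b) -> (forall a b, A <> Or a b) -> (forall p, A <> Var p) -> A <> Bot ->
  prv false (A :: D) chi -> prv false D chi.
Proof.
  intros cut_below IHm HL HImp HBox HnA HnO HnV HnB HR.
  inversion HR; subst.
  - destruct (perm_distinct_heads _ _ _ _ _ H (Permutation_refl _) (not_eq_sym HnB))
      as (K & HK1 & HK2).
    eapply BotL; exact HK1.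
  - destruct (perm_distinct_heads _ _ _ _ _ H (Permutation_refl _) (not_eq_sym (HnV p)))
      as (K & HK1 & HK2).
    eapply IdP; exact HK1.
  - destruct (perm_distinct_heads _ _ _ _ _ H (Permutation_refl _) (not_eq_sym (HnA a b)))
      as (K & HK1 & HK2).
    eapply AndL; [exact HK1 |].
    apply IHm; [measure_perm HK1 measure_AndL | apply AndL_inv; eapply prv_perm; eauto |].
    eapply prv_perm; [exact H0 | solve_perm].
  - apply AndR; apply IHm; auto; [apply measure_AndR1 | apply measure_AndR2].
  - destruct (perm_distinct_heads _ _ _ _ _ H (Permutation_refl _) (not_eq_sym (HnO a b)))
      as (K & HK1 & HK2).
    assert (HL' : prv false (Or a b :: K) A) by (eapply prv_perm; eauto).
    eapply OrL; [exact HK1 | |].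
    + apply IHm; [measure_perm HK1 measure_OrL1 | exact (OrL_inv1 _ _ _ _ HL') |].
      eapply prv_perm; [exact H0 | solve_perm].
    + apply IHm; [measure_perm HK1 measure_OrL2 | exact (OrL_inv2 _ _ _ _ HL') |].
      eapply prv_perm; [exact H1 | solve_perm].
  - apply OrR1; apply IHm; auto; apply measure_OrR1.
  - apply OrR2; apply IHm; auto; apply measure_OrR2.
  - destruct (form_eq_dec A (Imp (Var p) a)) as [-> | Hne].
    + assert (HD : Permutation D (Var p :: G))
        by (apply (Permutation_cons_inv (a := Imp (Var p) a)); rewrite H; apply perm_swap).
      eapply prv_perm; [apply (cut_VarImp p a G) | symmetry; exact HD].
      * apply cut_below; simpl; lia.
      * eapply prv_perm; [exact (HImp _ _ eq_refl) | solve_perm].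
      * eapply prv_perm; [exact H0 | solve_perm].
    + destruct (perm_distinct_heads2 _ _ _ _ _ _ H (Permutation_refl _)
                  (not_eq_sym (HnV p)) (not_eq_sym Hne)) as (K & HK1 & HK2).
      assert (HL' : prv false (Var p :: a :: K) A).
      { eapply prv_perm; [apply (VarImpL_concl_inv p a (Var p :: K)) | solve_perm].
        eapply prv_perm; [exact HL | solve_perm]. }
      eapply PImpL; [exact HK1 |].
      apply IHm; [measure_perm HK1 measure_PImpL | exact HL' |].
      eapply prv_perm; [exact H0 | solve_perm].
  - apply ImpR. apply IHm; [apply measure_ImpR | apply prv_weaken, HL |].
    eapply prv_perm; [exact H | solve_perm].
  - destruct (form_eq_dec A (Imp (Box a) b)) as [-> | Hne].
    + pose proof (perm_same_head _ _ _ _ H0 (Permutation_refl _)) as HG.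
      apply (cut_BoxImp a b D chi); [apply cut_below; simpl; lia .. | exact (HImp _ _ eq_refl) | |].
      * eapply prv_perm; [exact H1 |]. rewrite <- (map_unbox_split _ _ H).
        apply (Permutation_map unbox) in HG. solve_perm.
      * eapply prv_perm; [exact H2 | solve_perm].
    + destruct (perm_distinct_heads _ _ _ _ _ H0 (Permutation_refl _) (not_eq_sym Hne))
        as (K & HK1 & HK2).
      assert (HL' : prv false (b :: K) A).
      { apply (BoxImpL_concl_inv a). eapply prv_perm; [exact HL | solve_perm]. }
      assert (Hm : Permutation (Phi ++ G) (unbox A :: map unbox K)).
      { rewrite <- (map_unbox_split _ _ H). exact (Permutation_map unbox HK2). }
      eapply prv_perm; [apply BoxImpL_unbox | symmetry; exact HK1].
      * apply IHm; [measure_perm HK1 measure_BoxImpL1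
                   | apply prv_weaken, (prv_unbox_suffix false [b]), HL' |].
        destruct (box_or_unbox_id A) as [(a0 & ->) | EA].
        -- simpl in Hm. apply cut_box_body; [apply cut_below; simpl; lia | |].
           ++ assert (Hb0 : prv false (b :: Box a0 :: map unbox K) a0).
              { apply (BoxImpL_concl_inv a). eapply prv_perm; [exact (HBox a0 eq_refl) |].
                apply (Permutation_map unbox) in HK1. simpl in HK1. solve_perm. }
              eapply prv_perm; [exact (prv_weaken _ _ _ (Box a) Hb0) | solve_perm].
           ++ eapply prv_perm; [exact H1 | solve_perm].
        -- rewrite EA in Hm. eapply prv_perm; [exact H1 | solve_perm].
      * apply IHm; [measure_perm HK1 measure_BoxImpL2 | exact HL' |].
        eapply prv_perm; [exact H2 | solve_perm].
  - apply SLtR_unbox.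
    assert (Hm : Permutation (Phi ++ G) (unbox A :: map unbox D)).
    { symmetry. exact (perm_map_unbox _ _ _ H0 H). }
    apply IHm; [apply measure_SLtR | apply prv_weaken, (prv_unbox_suffix false []), HL |].
    destruct (box_or_unbox_id A) as [(a0 & ->) | EA].
    + simpl in Hm. apply cut_box_body; [apply cut_below; simpl; lia | |].
      * eapply prv_perm; [exact (prv_weaken _ _ _ (Box a) (HBox a0 eq_refl)) | solve_perm].
      * eapply prv_perm; [exact H1 | solve_perm].
    + rewrite EA in Hm. eapply prv_perm; [exact H1 | solve_perm].
  - destruct (form_eq_dec A (Imp (And a b) c)) as [-> | Hne].
    + pose proof (perm_same_head _ _ _ _ H (Permutation_refl _)) as HG.
      apply (cut_AndImp a b c); [apply cut_below; simpl; lia | exact (HImp _ _ eq_refl) |].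
      eapply prv_perm; [exact H0 | solve_perm].
    + destruct (perm_distinct_heads _ _ _ _ _ H (Permutation_refl _) (not_eq_sym Hne))
        as (K & HK1 & HK2).
      eapply AndImpL; [exact HK1 |].
      apply IHm; [measure_perm HK1 measure_AndImpL | apply AndImpL_inv; eapply prv_perm; eauto |].
      eapply prv_perm; [exact H0 | solve_perm].
  - destruct (form_eq_dec A (Imp (Or a b) c)) as [-> | Hne].
    + pose proof (perm_same_head _ _ _ _ H (Permutation_refl _)) as HG.
      pose proof (weight_pos a); pose proof (weight_pos b).
      apply (cut_OrImp a b c); [apply cut_below; simpl; lia .. | exact (HImp _ _ eq_refl) |].
      eapply prv_perm; [exact H0 | solve_perm].
    + destruct (perm_distinct_heads _ _ _ _ _ H (Permutation_refl _) (not_eq_sym Hne))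
        as (K & HK1 & HK2).
      eapply OrImpL; [exact HK1 |].
      apply IHm; [measure_perm HK1 measure_OrImpL | apply OrImpL_inv; eapply prv_perm; eauto |].
      eapply prv_perm; [exact H0 | solve_perm].
  - destruct (form_eq_dec A (Imp (Imp a b) c)) as [-> | Hne].
    + pose proof (perm_same_head _ _ _ _ H (Permutation_refl _)) as HG.
      apply (cut_ImpImp a b c); [apply cut_below; simpl; lia .. | exact (HImp _ _ eq_refl) | |].
      * eapply prv_perm; [exact H0 | solve_perm].
      * eapply prv_perm; [exact H1 | solve_perm].
    + destruct (perm_distinct_heads _ _ _ _ _ H (Permutation_refl _) (not_eq_sym Hne))
        as (K & HK1 & HK2).
      assert (HL' : prv false (Imp (Imp a b) c :: K) A) by (eapply prv_perm; eauto).
      eapply ImpImpL; [exact HK1 | |].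
      * apply ImpR, IHm; [measure_perm HK1 measure_ImpImpL1 | apply ImpImpL_inv, HL' |].
        apply ImpR_inv in H0. eapply prv_perm; [exact H0 | solve_perm].
      * apply IHm; [measure_perm HK1 measure_ImpImpL2 | exact (ImpImpL_concl_inv _ _ _ _ _ HL') |].
        eapply prv_perm; [exact H1 | solve_perm].
  - discriminate.
Qed.

Lemma cut_adm_step A : (forall B, weight B < weight A -> cut_adm B) -> cut_adm A.
Proof.
  intros cut_below.
  enough (Hm : forall m D chi, seq_measure D chi = m ->
                 prv false D A -> prv false (A :: D) chi -> prv false D chi)
    by (intros D chi; exact (Hm _ D chi eq_refl)).
  induction m as [m IHm0] using lt_wf_ind. intros D chi Hmu HL HR.
  assert (IHm : forall D' chi', seq_measure D' chi' < seq_measure D chi ->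
                  prv false D' A -> prv false (A :: D') chi' -> prv false D' chi')
    by (intros D' chi' Hlt; eapply IHm0; [| reflexivity]; lia).
  clear IHm0 Hmu.
  inversion HL; subst.
  - eapply BotL; exact H.
  - eapply prv_perm; [apply prv_contract | symmetry; exact H].
    eapply prv_perm; [exact HR | solve_perm].
  - apply (fun H' => prv_perm _ _ (And a b :: A :: G) _ H'), AndL_inv in HR; [| solve_perm].
    eapply AndL; [exact H |].
    apply IHm; [measure_perm H measure_AndL | exact H0 | eapply prv_perm; [exact HR | solve_perm]].
  - apply (cut_AndR a b); [apply cut_below; simpl; lia .. | exact H | exact H0 | exact HR].
  - apply (fun H' => prv_perm _ _ (Or a b :: A :: G) _ H') in HR; [| solve_perm].
    eapply OrL; [exact H | |].
    + apply IHm; [measure_perm H measure_OrL1 | exact H0 |].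
      eapply prv_perm; [apply (OrL_inv1 _ _ _ _ HR) | solve_perm].
    + apply IHm; [measure_perm H measure_OrL2 | exact H1 |].
      eapply prv_perm; [apply (OrL_inv2 _ _ _ _ HR) | solve_perm].
  - pose proof (weight_pos b).
    exact (cut_OrR1 a b D chi ltac:(apply cut_below; simpl; lia) H HR).
  - pose proof (weight_pos a).
    exact (cut_OrR2 a b D chi ltac:(apply cut_below; simpl; lia) H HR).
  - apply (fun H' => prv_perm _ _ (Imp (Var p) a :: A :: Var p :: G) _ H'), VarImpL_concl_inv in HR;
      [| solve_perm].
    eapply PImpL; [exact H |].
    apply IHm; [measure_perm H measure_PImpL | exact H0 | eapply prv_perm; [exact HR | solve_perm]].
  - apply (cut_on_right_premise (Imp a b) D chi); auto; try (intros; discriminate).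
    intros a' b' E. injection E as <- <-. exact H.
  - apply (fun H' => prv_perm _ _ (Imp (Box a) b :: A :: Phi ++ boxes G) _ H'), BoxImpL_concl_inv
      in HR; [| solve_perm].
    eapply BoxImpL; [exact H | exact H0 | exact H1 |].
    apply IHm; [measure_perm H0 measure_BoxImpL2 | exact H2 | eapply prv_perm; [exact HR | solve_perm]].
  - apply (cut_on_right_premise (Box a) D chi); auto; try (intros; discriminate).
    intros a' E. injection E as <-.
    eapply prv_perm; [exact H1 |]. apply perm_skip. symmetry. exact (perm_map_unbox _ _ _ H0 H).
  - apply (fun H' => prv_perm _ _ (Imp (And a b) c :: A :: G) _ H'), AndImpL_inv in HR;
      [| solve_perm].
    eapply AndImpL; [exact H |].
    apply IHm; [measure_perm H measure_AndImpL | exact H0 | eapply prv_perm; [exact HR | solve_perm]].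
  - apply (fun H' => prv_perm _ _ (Imp (Or a b) c :: A :: G) _ H'), OrImpL_inv in HR;
      [| solve_perm].
    eapply OrImpL; [exact H |].
    apply IHm; [measure_perm H measure_OrImpL | exact H0 | eapply prv_perm; [exact HR | solve_perm]].
  - apply (fun H' => prv_perm _ _ (Imp (Imp a b) c :: A :: G) _ H'), ImpImpL_concl_inv in HR;
      [| solve_perm].
    eapply ImpImpL; [exact H | exact H0 |].
    apply IHm; [measure_perm H measure_ImpImpL2 | exact H1 | eapply prv_perm; [exact HR | solve_perm]].
  - discriminate.
Qed.

Lemma cut_admissible A : cut_adm A.
Proof.
  induction A as [A IH] using (well_founded_induction (Wf_nat.well_founded_ltof _ weight)).
  apply cut_adm_step. exact IH.
Qed.

Lemma prv_cut_elim G chi : prv true G chi -> prv false G chi.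
Proof.
  induction 1.
  - eapply BotL; eauto.
  - eapply IdP; eauto.
  - eapply AndL; eauto.
  - apply AndR; auto.
  - eapply OrL; eauto.
  - apply OrR1; auto.
  - apply OrR2; auto.
  - eapply PImpL; eauto.
  - apply ImpR; auto.
  - eapply BoxImpL; eauto.
  - eapply SLtR; eauto.
  - eapply AndImpL; eauto.
  - eapply OrImpL; eauto.
  - eapply ImpImpL; eauto.
  - eapply cut_admissible; eauto.
Qed.

Theorem theorem3 : forall (G : list form) (chi : form),
  G4iSLt_cut_prv G chi -> G4iSLt_prv G chi.
Proof. exact prv_cut_elim. Qed.
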